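(* A sequent $\Gamma\vdash M$ is provable in system $\mathcal S$ if and only if it is provable in system $\mathcal L$.
   Context: Fix countably infinite sets of names and variables and the constructors $\mathsf{pub}$ (unary) and $\mathsf{sign},\mathsf{blind},\langle\cdot,\cdot\rangle,\{\cdot\}_{\cdot}$ (binary). Let $E$ be an equational theory whose signature $\Sigma_E$ is disjoint from the constructors, containing at most one associative-commutative (AC) binary symbol $\oplus$, presented by a rewrite system $R_E$ terminating and confluent modulo AC of $\oplus$. Terms: names, variables, $\mathsf{pub}(M)$, $\mathsf{sign}(M,N)$, $\mathsf{blind}(M,N)$, $\langle M,N\rangle$, $\{M\}_N$, $g(M_1,\dots,M_j)$ with $g\in\Sigma_E$; all ground. $\equiv$ is equality modulo AC, $\approx_E$ equality modulo $E$. A term is guarded if it is a name, a variable, or headed by a constructor. An $E$-context is a term with holes built only from symbols of $\Sigma_E$. Sequents $\Gamma\vdash M$ ($\Gamma$ a finite set of terms) have all terms in $R_E$-normal form modulo AC; $\Gamma,M$ means $\Gamma\cup\{M\}$. System $\mathcal S$: (id) $\Gamma\vdash M$ with no premise if $M\approx_E C[M_1,\dots,M_k]$ for an $E$-context $C$ and $M_i\in\Gamma$; (cut) from $\Gamma\vdash M$, $\Gamma,M\vdash T$ infer $\Gamma\vdash T$; ($p_L$) from $\Gamma,\langle M,N\rangle,M,N\vdash T$ infer $\Gamma,\langle M,N\rangle\vdash T$; ($p_R$) from $\Gamma\vdash M$, $\Gamma\vdash N$ infer $\Gamma\vdash\langle M,N\rangle$; ($e_L$) from $\Gamma,\{M\}_K\vdash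 K$ and $\Gamma,\{M\}_K,M,K\vdash N$ infer $\Gamma,\{M\}_K\vdash N$; ($e_R$) from $\Gamma\vdash M$, $\Gamma\vdash K$ infer $\Gamma\vdash\{M\}_K$; ($\mathsf{sign}_L$) from $\Gamma,\mathsf{sign}(M,K),\mathsf{pub}(L),M\vdash N$ infer $\Gamma,\mathsf{sign}(M,K),\mathsf{pub}(L)\vdash N$ provided $K\equiv L$; ($\mathsf{sign}_R$) from $\Gamma\vdash M$, $\Gamma\vdash K$ infer $\Gamma\vdash\mathsf{sign}(M,K)$; ($\mathsf{blind}_{L1}$) from $\Gamma,\mathsf{blind}(M,K)\vdash K$ and $\Gamma,\mathsf{blind}(M,K),M,K\vdash N$ infer $\Gamma,\mathsf{blind}(M,K)\vdash N$; ($\mathsf{blind}_R$) from $\Gamma\vdash M$, $\Gamma\vdash K$ infer $\Gamma\vdash\mathsf{blind}(M,K)$; ($\mathsf{blind}_{L2}$) from $\Gamma,\mathsf{sign}(\mathsf{blind}(M,R),K)\vdash R$ and $\Gamma,\mathsf{sign}(\mathsf{blind}(M,R),K),\mathsf{sign}(M,K),R\vdash N$ infer $\Gamma,\mathsf{sign}(\mathsf{blind}(M,R),K)\vdash N$; ($gs$) from $\Gamma\vdash A$, $\Gamma,A\vdash M$ infer $\Gamma\vdash M$, provided $A$ is a guarded subterm of a term in $\Gamma\cup\{M\}$. $\Gamma\Vdash_{\mathcal R}M$ means $\Gamma\vdash M$ is derivable in $\mathcal S$ using only (id), $p_R,e_R,\mathsf{sign}_R,\mathsf{blind}_R$. System $\mathcal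 L$: ($r$) $\Gamma\vdash M$ with no premise if $\Gamma\Vdash_{\mathcal R}M$; ($lp$) from $\Gamma,\langle M,N\rangle,M,N\vdash T$ infer $\Gamma,\langle M,N\rangle\vdash T$; ($le$) from $\Gamma,\{M\}_K,M,K\vdash N$ infer $\Gamma,\{M\}_K\vdash N$ provided $\Gamma,\{M\}_K\Vdash_{\mathcal R}K$; ($\mathsf{sign}$) from $\Gamma,\mathsf{sign}(M,K),\mathsf{pub}(L),M\vdash N$ infer $\Gamma,\mathsf{sign}(M,K),\mathsf{pub}(L)\vdash N$ provided $K\equiv L$; ($\mathsf{blind}_1$) from $\Gamma,\mathsf{blind}(M,K),M,K\vdash N$ infer $\Gamma,\mathsf{blind}(M,K)\vdash N$ provided $\Gamma,\mathsf{blind}(M,K)\Vdash_{\mathcal R}K$; ($\mathsf{blind}_2$) from $\Gamma,\mathsf{sign}(\mathsf{blind}(M,R),K),\mathsf{sign}(M,K),R\vdash N$ infer $\Gamma,\mathsf{sign}(\mathsf{blind}(M,R),K)\vdash N$ provided $\Gamma,\mathsf{sign}(\mathsf{blind}(M,R),K)\Vdash_{\mathcal R}R$; ($ls$) from $\Gamma,A\vdash M$ infer $\Gamma\vdash M$ provided $A$ is a guarded subterm of a term in $\Gamma\cup\{M\}$ and $\Gamma\Vdash_{\mathcal R}A$. *)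

From Stdlib Require Import List Relations.
Import ListNotations.

Section Intruder.

(* Signature Sigma_E of the equational theory: symbols of type F with arities;
   it is disjoint from the constructors by construction of [term]. *)
Variable F : Type.
Variable arity : F -> nat.
Variable oplus : option F.

Inductive term : Type :=
| Name  : nat -> term
| Var   : nat -> term
| Pub   : term -> term
| Sign  : term -> term -> term
| Blind : term -> term -> term
| Pair  : term -> term -> term
| Enc   : term -> term -> term            (* { M }_K  is  Enc M K *)
| App   : F -> list term -> term.

Inductive wf : term -> Prop :=
| wf_Name n : wf (Name n)
| wf_Var n : wf (Var n)
| wf_Pub t : wf t -> wf (Pub t)
| wf_Sign s t : wf s -> wf t -> wf (Sign s t)
| wf_Blind s t : wf s -> wf t -> wf (Blind s t)
| wf_Pair s t : wf s -> wf t -> wf (Pair s t)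
| wf_Enc s t : wf s -> wf t -> wf (Enc s t)
| wf_App f args : length args = arity f -> (forall a, In a args -> wf a) ->
    wf (App f args).

Inductive pat : Type :=
| PVar : nat -> pat
| PApp : F -> list pat -> pat.

Inductive wf_pat : pat -> Prop :=
| wfp_Var x : wf_pat (PVar x)
| wfp_App f ps : length ps = arity f -> (forall p, In p ps -> wf_pat p) ->
    wf_pat (PApp f ps).

Fixpoint inst (sigma : nat -> term) (p : pat) : term :=
  match p with
  | PVar x => sigma x
  | PApp f ps => App f (map (inst sigma) ps)
  end.

Inductive ctx_closure (r : term -> term -> Prop) : term -> term -> Prop :=
| cc_top s t : r s t -> ctx_closure r s t
| cc_Pub s t : ctx_closure r s t -> ctx_closure r (Pub s) (Pub t)
| cc_Sign1 s t u : ctx_closure r s t -> ctx_closure r (Sign s u) (Sign t u)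
| cc_Sign2 s t u : ctx_closure r s t -> ctx_closure r (Sign u s) (Sign u t)
| cc_Blind1 s t u : ctx_closure r s t -> ctx_closure r (Blind s u) (Blind t u)
| cc_Blind2 s t u : ctx_closure r s t -> ctx_closure r (Blind u s) (Blind u t)
| cc_Pair1 s t u : ctx_closure r s t -> ctx_closure r (Pair s u) (Pair t u)
| cc_Pair2 s t u : ctx_closure r s t -> ctx_closure r (Pair u s) (Pair u t)
| cc_Enc1 s t u : ctx_closure r s t -> ctx_closure r (Enc s u) (Enc t u)
| cc_Enc2 s t u : ctx_closure r s t -> ctx_closure r (Enc u s) (Enc u t)
| cc_App f l1 l2 s t : ctx_closure r s t ->
    ctx_closure r (App f (l1 ++ s :: l2)) (App f (l1 ++ t :: l2)).

Inductive ac_axiom : term -> term -> Prop :=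
| ac_assoc f a b c : oplus = Some f ->
    ac_axiom (App f [a; App f [b; c]]) (App f [App f [a; b]; c])
| ac_comm f a b : oplus = Some f ->
    ac_axiom (App f [a; b]) (App f [b; a]).

Definition acstep : term -> term -> Prop := ctx_closure ac_axiom.

Definition ac_eq : term -> term -> Prop := clos_refl_sym_trans term acstep.

Section Rewriting.
Variable RE : list (pat * pat).

Inductive rule_top : term -> term -> Prop :=
| rt_inst l r sigma : In (l, r) RE -> rule_top (inst sigma l) (inst sigma r).

Definition rstep : term -> term -> Prop := ctx_closure rule_top.

Definition rstepAC (s t : term) : Prop :=
  wf s /\ wf t /\ exists s' t', ac_eq s s' /\ rstep s' t' /\ ac_eq t' t.

Definition normal (t : term) : Prop := forall u, ~ rstepAC t u.

Definition terminating_modAC : Prop :=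
  forall t, wf t -> Acc (fun u v => rstepAC v u) t.

Definition confluent_modAC : Prop :=
  forall s t1 t2, wf s ->
    clos_refl_trans term rstepAC s t1 -> clos_refl_trans term rstepAC s t2 ->
    exists u1 u2, clos_refl_trans term rstepAC t1 u1 /\
                  clos_refl_trans term rstepAC t2 u2 /\ ac_eq u1 u2.

Definition estep (s t : term) : Prop :=
  wf s /\ wf t /\ (rstep s t \/ acstep s t).
Definition eqE : term -> term -> Prop := clos_refl_sym_trans term estep.

(* Terms of the form C[M1,...,Mk] with C an E-context (built only from
   symbols of Sigma_E and holes) and every Mi in Gamma. *)
Inductive ectx (Gamma : list term) : term -> Prop :=
| ectx_hole t : In t Gamma -> ectx Gamma t
| ectx_App f args : length args = arity f ->
    (forall a, In a args -> ectx Gamma a) -> ectx Gamma (App f args).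

Inductive isub : term -> term -> Prop :=
| is_Pub t : isub t (Pub t)
| is_Sign1 s t : isub s (Sign s t)
| is_Sign2 s t : isub t (Sign s t)
| is_Blind1 s t : isub s (Blind s t)
| is_Blind2 s t : isub t (Blind s t)
| is_Pair1 s t : isub s (Pair s t)
| is_Pair2 s t : isub t (Pair s t)
| is_Enc1 s t : isub s (Enc s t)
| is_Enc2 s t : isub t (Enc s t)
| is_App f args a : In a args -> isub a (App f args).

Definition subterm : term -> term -> Prop := clos_refl_trans term isub.

Definition guarded (t : term) : Prop :=
  match t with App _ _ => False | _ => True end.

Definition gsub (A : term) (Gamma : list term) (M : term) : Prop :=
  guarded A /\ exists u, (In u Gamma \/ u = M) /\ subterm A u.

(* a sequent Gamma |- M: all its terms are (well-formed and) in normal form.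
   Contexts are finite sets, represented by lists (only membership matters);
   "Gamma, M" is M :: Gamma. *)
Definition seq_ok (Gamma : list term) (M : term) : Prop :=
  (forall t, In t Gamma -> wf t /\ normal t) /\ wf M /\ normal M.

Definition id_cond (Gamma : list term) (M : term) : Prop :=
  exists C, ectx Gamma C /\ eqE M C.

Inductive provS : list term -> term -> Prop :=
| S_id G M : seq_ok G M -> id_cond G M -> provS G M
| S_cut G M T : seq_ok G T -> provS G M -> provS (M :: G) T -> provS G T
| S_pL G M N T : seq_ok G T -> In (Pair M N) G ->
    provS (M :: N :: G) T -> provS G T
| S_pR G M N : seq_ok G (Pair M N) -> provS G M -> provS G N ->
    provS G (Pair M N)
| S_eL G M K N : seq_ok G N -> In (Enc M K) G ->
    provS G K -> provS (M :: K :: G) N -> provS G N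
| S_eR G M K : seq_ok G (Enc M K) -> provS G M -> provS G K ->
    provS G (Enc M K)
| S_signL G M K L N : seq_ok G N -> In (Sign M K) G -> In (Pub L) G ->
    ac_eq K L -> provS (M :: G) N -> provS G N
| S_signR G M K : seq_ok G (Sign M K) -> provS G M -> provS G K ->
    provS G (Sign M K)
| S_blindL1 G M K N : seq_ok G N -> In (Blind M K) G ->
    provS G K -> provS (M :: K :: G) N -> provS G N
| S_blindR G M K : seq_ok G (Blind M K) -> provS G M -> provS G K ->
    provS G (Blind M K)
| S_blindL2 G M R K N : seq_ok G N -> In (Sign (Blind M R) K) G ->
    provS G R -> provS (Sign M K :: R :: G) N -> provS G N
| S_gs G A M : seq_ok G M -> gsub A G M ->
    provS G A -> provS (A :: G) M -> provS G M.

Inductive provR : list term -> term -> Prop :=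
| R_id G M : seq_ok G M -> id_cond G M -> provR G M
| R_pR G M N : seq_ok G (Pair M N) -> provR G M -> provR G N ->
    provR G (Pair M N)
| R_eR G M K : seq_ok G (Enc M K) -> provR G M -> provR G K ->
    provR G (Enc M K)
| R_signR G M K : seq_ok G (Sign M K) -> provR G M -> provR G K ->
    provR G (Sign M K)
| R_blindR G M K : seq_ok G (Blind M K) -> provR G M -> provR G K ->
    provR G (Blind M K).

Inductive provL : list term -> term -> Prop :=
| L_r G M : seq_ok G M -> provR G M -> provL G M
| L_lp G M N T : seq_ok G T -> In (Pair M N) G ->
    provL (M :: N :: G) T -> provL G T
| L_le G M K N : seq_ok G N -> In (Enc M K) G -> provR G K ->
    provL (M :: K :: G) N -> provL G N
| L_sign G M K L N : seq_ok G N -> In (Sign M K) G -> In (Pub L) G ->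
    ac_eq K L -> provL (M :: G) N -> provL G N
| L_blind1 G M K N : seq_ok G N -> In (Blind M K) G -> provR G K ->
    provL (M :: K :: G) N -> provL G N
| L_blind2 G M R K N : seq_ok G N -> In (Sign (Blind M R) K) G -> provR G R ->
    provL (Sign M K :: R :: G) N -> provL G N
| L_ls G A M : seq_ok G M -> gsub A G M -> provR G A ->
    provL (A :: G) M -> provL G M.

End Rewriting.
End Intruder.

Arguments Name {F}.
Arguments Var {F}.
Arguments Pub {F}.
Arguments Sign {F}.
Arguments Blind {F}.
Arguments Pair {F}.
Arguments Enc {F}.
Arguments App {F}.
Arguments PVar {F}.
Arguments PApp {F}.
Arguments wf {F}.
Arguments wf_pat {F}.
Arguments terminating_modAC {F}.
Arguments confluent_modAC {F}.
Arguments provS {F}.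
Arguments provL {F}.
Arguments provR {F}.

(* L is S without the cut rules (cut) and (gs), with the right rules confined to its
   leaves (r), and with the side premises of the left rules derived in R.  Right rules are
   admissible in L because left rules hardly look at the goal, so the equivalence reduces
   to cut admissibility in L.  This goes by induction on the size of the cut formula A and
   on the L-derivation of A, G |- T, whose context is only required to be AC-included in
   A, G.  A left rule decomposing A is a principal cut and yields cuts on the strictly
   smaller components of A.  If A occurs, up to AC, as a subterm of G |- T, one (ls) step
   on that occurrence replaces A in the context.  Otherwise A is fresh, and in an (id) leaf
   M =E C[A, G] the term A can be replaced by any E-context over G: by Church-Rosser
   modulo AC, and since rewrite rules introduce no variables, this abstraction preserves
   the E-equality with the normal form M. *)

From Stdlib Require Import List Relations Lia Arith Classical ClassicalEpsilon.
Import ListNotations.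

Section Intruder.
Variable F : Type.
Variable arity : F -> nat.
Variable oplus : option F.
Variable RE : list (pat F * pat F).
Hypothesis oplus_binary : forall f, oplus = Some f -> arity f = 2.
Hypothesis rules_wf : forall l r, In (l, r) RE -> wf_pat arity l /\ wf_pat arity r.
Hypothesis RE_terminating : terminating_modAC arity oplus RE.
Hypothesis RE_confluent : confluent_modAC arity oplus RE.

Local Notation tm := (term F).
Local Notation wf := (wf arity).
Local Notation acstep := (acstep F oplus).
Local Notation ac := (ac_eq F oplus).
Local Notation rstep := (rstep F RE).
Local Notation rAC := (rstepAC F arity oplus RE).
Local Notation rewrites := (clos_refl_trans tm rAC).
Local Notation normal := (normal F arity oplus RE).
Local Notation eqE := (eqE F arity oplus RE).
Local Notation ectx := (ectx F arity).
Local Notation subterm := (subterm F).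
Local Notation isub := (isub F).
Local Notation guarded := (guarded F).
Local Notation id_cond := (id_cond F arity oplus RE).
Local Notation ok := (seq_ok F arity oplus RE).
Local Notation pR := (provR arity oplus RE).
Local Notation pL := (provL arity oplus RE).
Local Notation pS := (provS arity oplus RE).

Section TermInd.
Variable P : tm -> Prop.
Hypothesis P_Name : forall n, P (Name n).
Hypothesis P_Var : forall n, P (Var n).
Hypothesis P_Pub : forall a, P a -> P (Pub a).
Hypothesis P_Sign : forall a b, P a -> P b -> P (Sign a b).
Hypothesis P_Blind : forall a b, P a -> P b -> P (Blind a b).
Hypothesis P_Pair : forall a b, P a -> P b -> P (Pair a b).
Hypothesis P_Enc : forall a b, P a -> P b -> P (Enc a b).
Hypothesis P_App : forall f args, (forall a, In a args -> P a) -> P (App f args).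

Fixpoint term_nested_ind (t : tm) : P t :=
  match t with
  | Name n => P_Name n
  | Var n => P_Var n
  | Pub a => P_Pub a (term_nested_ind a)
  | Sign a b => P_Sign a b (term_nested_ind a) (term_nested_ind b)
  | Blind a b => P_Blind a b (term_nested_ind a) (term_nested_ind b)
  | Pair a b => P_Pair a b (term_nested_ind a) (term_nested_ind b)
  | Enc a b => P_Enc a b (term_nested_ind a) (term_nested_ind b)
  | App f args => P_App f args
      ((fix go (l : list tm) : forall a, In a l -> P a :=
          match l with
          | [] => fun a H => False_ind _ H
          | b :: l' => fun a H =>
              match H with
              | or_introl e => eq_ind b P (term_nested_ind b) a e
              | or_intror H' => go l' a H'
              end
          end) args)
  end.
End TermInd.

Section PatInd.
Variable P : pat F -> Prop.
Hypothesis P_PVar : forall n, P (PVar n).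
Hypothesis P_PApp : forall f ps, (forall p, In p ps -> P p) -> P (PApp f ps).

Fixpoint pat_nested_ind (p : pat F) : P p :=
  match p with
  | PVar n => P_PVar n
  | PApp f ps => P_PApp f ps
      ((fix go (l : list (pat F)) : forall a, In a l -> P a :=
          match l with
          | [] => fun a H => False_ind _ H
          | b :: l' => fun a H =>
              match H with
              | or_introl e => eq_ind b P (pat_nested_ind b) a e
              | or_intror H' => go l' a H'
              end
          end) ps)
  end.
End PatInd.

Fixpoint term_size (t : tm) : nat :=
  match t with
  | Name _ | Var _ => 1
  | Pub a => S (term_size a)
  | Sign a b | Blind a b | Pair a b | Enc a b => S (term_size a + term_size b)
  | App f args => S (list_sum (map term_size args))
  end.

Inductive frame : Type :=
| FPub
| FSign1 (t : tm) | FSign2 (s : tm)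
| FBlind1 (t : tm) | FBlind2 (s : tm)
| FPair1 (t : tm) | FPair2 (s : tm)
| FEnc1 (t : tm) | FEnc2 (s : tm)
| FApp (f : F) (l1 l2 : list tm).

Definition plug (c : frame) (a : tm) : tm :=
  match c with
  | FPub => Pub a
  | FSign1 t => Sign a t | FSign2 s => Sign s a
  | FBlind1 t => Blind a t | FBlind2 s => Blind s a
  | FPair1 t => Pair a t | FPair2 s => Pair s a
  | FEnc1 t => Enc a t | FEnc2 s => Enc s a
  | FApp f l1 l2 => App f (l1 ++ a :: l2)
  end.

Definition frame_map (h : tm -> tm) (c : frame) : frame :=
  match c with
  | FPub => FPub
  | FSign1 t => FSign1 (h t) | FSign2 s => FSign2 (h s)
  | FBlind1 t => FBlind1 (h t) | FBlind2 s => FBlind2 (h s)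
  | FPair1 t => FPair1 (h t) | FPair2 s => FPair2 (h s)
  | FEnc1 t => FEnc1 (h t) | FEnc2 s => FEnc2 (h s)
  | FApp f l1 l2 => FApp f (map h l1) (map h l2)
  end.

Lemma plug_guarded_or_App c :
  (forall a, guarded (plug c a)) \/ exists f l1 l2, c = FApp f l1 l2.
Proof. destruct c; [left; intros; exact I ..| right; eauto]. Qed.

Lemma isub_plug c a : isub a (plug c a).
Proof. destruct c; constructor. apply in_or_app; simpl; auto. Qed.

Lemma isubE a b : isub a b -> exists c, b = plug c a.
Proof.
  intros H; destruct H;
    [exists FPub | eexists (FSign1 _) | eexists (FSign2 _) | eexists (FBlind1 _)
    | eexists (FBlind2 _) | eexists (FPair1 _) | eexists (FPair2 _) | eexists (FEnc1 _)
    | eexists (FEnc2 _) | ]; try reflexivity.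
  apply in_split in H as [l1 [l2 ->]]; now exists (FApp f l1 l2).
Qed.

Lemma isub_plug_other c s t d : isub d (plug c s) -> d = s \/ isub d (plug c t).
Proof.
  destruct c; intros H; inversion H; subst; auto; try (right; constructor; fail).
  match goal with Hd : In d _ |- _ =>
    apply in_app_or in Hd; destruct Hd as [Hd|[<-|Hd]] end; auto;
  right; constructor; apply in_or_app; simpl; auto.
Qed.

Lemma ctx_closure_plug r c s t :
  ctx_closure F r s t -> ctx_closure F r (plug c s) (plug c t).
Proof. destruct c; simpl; intros; now constructor. Qed.

Lemma ctx_closure_plug_ind (r P : tm -> tm -> Prop) :
  (forall s t, r s t -> P s t) ->
  (forall c s t, ctx_closure F r s t -> P s t -> P (plug c s) (plug c t)) ->
  forall s t, ctx_closure F r s t -> P s t.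
Proof.
  intros Htop Hplug s t H; induction H; auto;
    [ apply (Hplug FPub) | apply (Hplug (FSign1 u)) | apply (Hplug (FSign2 u))
    | apply (Hplug (FBlind1 u)) | apply (Hplug (FBlind2 u)) | apply (Hplug (FPair1 u))
    | apply (Hplug (FPair2 u)) | apply (Hplug (FEnc1 u)) | apply (Hplug (FEnc2 u))
    | apply (Hplug (FApp f l1 l2)) ]; auto.
Qed.

Lemma ctx_closure_flip (r : tm -> tm -> Prop) x y :
  ctx_closure F r x y -> ctx_closure F (fun a b => r b a) y x.
Proof.
  revert x y; apply ctx_closure_plug_ind; intros.
  - now apply cc_top.
  - now apply ctx_closure_plug.
Qed.

Lemma wf_isub a b : isub a b -> wf b -> wf a.
Proof. intros H Hw; destruct H; inversion Hw; subst; auto. Qed.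

Lemma wf_plug_inv c a : wf (plug c a) -> wf a.
Proof. apply wf_isub, isub_plug. Qed.

Lemma wf_plug c a b : wf (plug c a) -> wf b -> wf (plug c b).
Proof.
  destruct c; simpl; intros Ha Hb; inversion Ha; subst; constructor; auto.
  - rewrite length_app in *; simpl in *; lia.
  - intros d Hd; apply in_app_or in Hd as [Hd|[<-|Hd]]; auto;
      match goal with H : forall a, In a _ -> wf a |- _ => apply H end;
      apply in_or_app; simpl; auto.
Qed.

Lemma subterm_isub x y : isub x y -> subterm x y.
Proof. apply rt_step. Qed.

Lemma subterm_trans x y z : subterm x y -> subterm y z -> subterm x z.
Proof. apply rt_trans. Qed.

Lemma subterm_isub_trans g c x : subterm g c -> isub c x -> subterm g x.
Proof. intros; eapply subterm_trans; eauto using subterm_isub. Qed.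

Lemma subtermE g x : subterm g x -> g = x \/ exists c, isub c x /\ subterm g c.
Proof.
  intros H; apply clos_rt_rtn1 in H; destruct H as [|y z Hyz H]; auto.
  right; exists y; split; auto. now apply clos_rtn1_rt.
Qed.

Lemma subterm_App a f l : In a l -> subterm a (App f l).
Proof. intros; apply subterm_isub; now constructor. Qed.

Lemma wf_subterm a b : subterm a b -> wf b -> wf a.
Proof. intros H; induction H; eauto using wf_isub. Qed.

Lemma term_size_isub a b : isub a b -> term_size a < term_size b.
Proof.
  assert (In_size : forall a l, In a l -> term_size a <= list_sum (map term_size l)).
  { induction l as [|x l IH]; simpl; [tauto|]. intros [->|H]; [lia|]. specialize (IH H); lia. }
  intros H; destruct H; simpl; try lia. apply In_size in H; lia.
Qed.

Lemma term_size_subterm a b : subterm a b -> a = b \/ term_size a < term_size b.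
Proof.
  intros H; apply clos_rt_rtn1 in H; induction H as [|y z Hyz H IH]; auto.
  right; apply term_size_isub in Hyz; destruct IH as [->|IH]; lia.
Qed.

Lemma clos_rst_map (R : tm -> tm -> Prop) (phi : tm -> tm) :
  (forall x y, R x y -> R (phi x) (phi y)) ->
  forall x y, clos_refl_sym_trans _ R x y -> clos_refl_sym_trans _ R (phi x) (phi y).
Proof.
  intros H x y Hxy; induction Hxy; eauto using clos_refl_sym_trans.
Qed.

Lemma ac_refl x : ac x x.
Proof. apply rst_refl. Qed.
Lemma ac_sym x y : ac x y -> ac y x.
Proof. apply rst_sym. Qed.
Lemma ac_trans x y z : ac x y -> ac y z -> ac x z.
Proof. apply rst_trans. Qed.
Lemma ac_step x y : acstep x y -> ac x y.
Proof. apply rst_step. Qed.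

Lemma ac_plug c a b : ac a b -> ac (plug c a) (plug c b).
Proof. apply (clos_rst_map _ (plug c)); intros; now apply ctx_closure_plug. Qed.

Lemma ac_Sign a a' b b' : ac a a' -> ac b b' -> ac (Sign a b) (Sign a' b').
Proof.
  intros; apply ac_trans with (Sign a' b);
    [apply (ac_plug (FSign1 b)) | apply (ac_plug (FSign2 a'))]; auto.
Qed.

Lemma ac_axiom_wf a b : ac_axiom F oplus a b -> (wf a <-> wf b).
Proof.
  assert (wf2 : forall f x y, arity f = 2 -> wf (App f [x; y]) <-> wf x /\ wf y).
  { intros f x y Hf; split.
    - intros H; inversion H; subst; split; auto with datatypes.
    - intros [Hx Hy]; constructor; [simpl; auto|]. intros d [<-|[<-|[]]]; auto. }
  intros H; destruct H as [f a b c Hf | f a b Hf]; pose proof (oplus_binary f Hf);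
    rewrite !wf2; tauto.
Qed.

Lemma ctx_closure_wf (r : tm -> tm -> Prop) :
  (forall a b, r a b -> (wf a <-> wf b)) ->
  forall s t, ctx_closure F r s t -> (wf s <-> wf t).
Proof.
  intros Hr; apply ctx_closure_plug_ind; auto.
  intros c s t _ IH; split; intros Hw; eapply wf_plug; eauto; apply IH; eapply wf_plug_inv; eauto.
Qed.

Lemma ac_wf a b : ac a b -> (wf a <-> wf b).
Proof.
  intros H; induction H; try tauto.
  now apply (ctx_closure_wf _ ac_axiom_wf).
Qed.

Inductive same_head : tm -> tm -> Prop :=
| sh_Name n : same_head (Name n) (Name n)
| sh_Var n : same_head (Var n) (Var n)
| sh_Pub a a' : ac a a' -> same_head (Pub a) (Pub a')
| sh_Sign a b a' b' : ac a a' -> ac b b' -> same_head (Sign a b) (Sign a' b')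
| sh_Blind a b a' b' : ac a a' -> ac b b' -> same_head (Blind a b) (Blind a' b')
| sh_Pair a b a' b' : ac a a' -> ac b b' -> same_head (Pair a b) (Pair a' b')
| sh_Enc a b a' b' : ac a a' -> ac b b' -> same_head (Enc a b) (Enc a' b')
| sh_App f g l l' : same_head (App f l) (App g l').

Lemma ac_same_head x y : ac x y -> same_head x y.
Proof.
  intros H; induction H as [x y H| x | x y _ IH | x y z _ IH1 _ IH2].
  - destruct H as [x y H| | | | | | | | | |]; try (constructor; auto using ac_refl, ac_step; fail).
    destruct H; constructor.
  - destruct x; constructor; apply ac_refl.
  - destruct IH; constructor; auto using ac_sym.
  - destruct IH1; inversion IH2; subst; constructor; eauto using ac_trans.
Qed.

Lemma ac_guarded x y : ac x y -> guarded x -> guarded y.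
Proof. intros H; apply ac_same_head in H; destruct H; simpl; auto. Qed.

Lemma ac_term_size x y : ac x y -> term_size x = term_size y.
Proof.
  intros H; induction H as [x y H| | |]; try lia.
  revert x y H; apply ctx_closure_plug_ind.
  - intros x y H; destruct H; simpl; lia.
  - intros c s t _ IH; destruct c; simpl; rewrite ?map_app, ?list_sum_app; simpl; lia.
Qed.

Lemma guarded_subterm_App_iff g f l : guarded g ->
  subterm g (App f l) <-> exists c, In c l /\ subterm g c.
Proof.
  intros Hg; split.
  - intros Hs; apply subtermE in Hs as [->|[c [Hc Hs]]]; [destruct Hg|].
    inversion Hc; subst; eauto.
  - intros [c [Hc Hs]]; eapply subterm_isub_trans; eauto; now constructor.
Qed.

Lemma ac_axiom_guarded_subterm x y g : ac_axiom F oplus x y -> guarded g ->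
  (subterm g x <-> subterm g y).
Proof.
  assert (In2 : forall (P : tm -> Prop) u v, (exists d, In d [u; v] /\ P d) <-> P u \/ P v).
  { intros P u v; simpl; firstorder subst; auto. }
  intros H Hg; destruct H; rewrite !guarded_subterm_App_iff, !In2, ?guarded_subterm_App_iff, ?In2
    by exact Hg; tauto.
Qed.

Lemma ctx_closure_guarded_subterm (r : tm -> tm -> Prop) :
  (forall x y, ctx_closure F r x y -> ac x y) ->
  (forall x y g, r x y -> guarded g -> subterm g x -> subterm g y) ->
  forall x y, ctx_closure F r x y ->
  forall g, guarded g -> subterm g x -> exists g', subterm g' y /\ ac g g'.
Proof.
  intros Hac Htop; apply (ctx_closure_plug_ind r
    (fun x y => forall g, guarded g -> subterm g x -> exists g', subterm g' y /\ ac g g')).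
  - intros x y H g Hg Hs; exists g; split; [eapply Htop; eauto | apply ac_refl].
  - intros c s t Hst IH g Hg Hs.
    apply subtermE in Hs as [->|[d [Hd Hs]]].
    + exists (plug c t); split; [apply rt_refl|]. apply Hac, ctx_closure_plug, Hst.
    + destruct (isub_plug_other c s t d Hd) as [->|Hd'].
      * destruct (IH g Hg Hs) as [g' [Hs' Hg']]; exists g'; split; auto.
        eapply subterm_isub_trans; eauto using isub_plug.
      * exists g; split; [eapply subterm_isub_trans; eauto| apply ac_refl].
Qed.

Lemma ac_guarded_subterm x y : ac x y ->
  forall g, guarded g -> subterm g x -> exists g', subterm g' y /\ ac g g'.
Proof.
  intros H; apply clos_rst_rst1n in H.
  induction H as [x| x y z Hxy _ IH]; intros g Hg Hs; [exists g; split; auto using ac_refl|].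
  assert (Hstep : exists g', subterm g' y /\ ac g g').
  { destruct Hxy as [Hxy|Hyx].
    - apply (ctx_closure_guarded_subterm (ac_axiom F oplus)) with x; auto.
      + intros; now apply ac_step.
      + intros ? ? ? Hax Hg'; now apply (ac_axiom_guarded_subterm _ _ _ Hax Hg').
    - apply (ctx_closure_guarded_subterm (fun a b => ac_axiom F oplus b a)) with x; auto.
      + intros a b Hab; apply ctx_closure_flip in Hab; now apply ac_sym, ac_step.
      + intros ? ? ? Hax Hg'; now apply (ac_axiom_guarded_subterm _ _ _ Hax Hg').
      + now apply ctx_closure_flip. }
  destruct Hstep as [g1 [Hs1 Ha1]].
  destruct (IH g1 (ac_guarded _ _ Ha1 Hg) Hs1) as [g2 [Hs2 Ha2]].
  exists g2; split; eauto using ac_trans.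
Qed.

(** * Normal forms and the Church-Rosser property *)

Lemma normal_ac s t : ac s t -> normal s -> normal t.
Proof.
  intros Hst Hn u [Ht [Hu [t' [u' [H1 [H2 H3]]]]]].
  apply (Hn u); repeat split; auto.
  - now apply (ac_wf s t).
  - exists t', u'; eauto using ac_trans.
Qed.

Lemma normal_plug c a : wf (plug c a) -> normal (plug c a) -> normal a.
Proof.
  intros Hw Hn u [Ha [Hu [a' [u' [Ha' [Hr Hu']]]]]].
  apply (Hn (plug c u)); repeat split; auto.
  - eapply wf_plug; eauto.
  - exists (plug c a'), (plug c u');
      repeat split; [apply ac_plug| apply ctx_closure_plug| apply ac_plug]; auto.
Qed.

Lemma normal_subterm a b : subterm a b -> wf b -> normal b -> normal a.
Proof.
  intros H; induction H as [a b H| |]; eauto using wf_subterm.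
  apply isubE in H as [c ->]; apply normal_plug.
Qed.

Definition nf (t : tm) : Prop := wf t /\ normal t.

Lemma nf_ac a b : nf a -> ac a b -> nf b.
Proof. intros [Hw Hn] Hab; split; [now apply (ac_wf a b)| eapply normal_ac; eauto]. Qed.

Lemma nf_subterm a b : subterm a b -> nf b -> nf a.
Proof. intros Hs [Hw Hn]; split; [eapply wf_subterm | eapply normal_subterm]; eauto. Qed.

Definition ctx_nf (G : list tm) : Prop := forall x, In x G -> nf x.

Lemma eqE_refl x : eqE x x.
Proof. apply rst_refl. Qed.
Lemma eqE_sym x y : eqE x y -> eqE y x.
Proof. apply rst_sym. Qed.
Lemma eqE_trans x y z : eqE x y -> eqE y z -> eqE x z.
Proof. apply rst_trans. Qed.

Lemma eqE_wf a b : eqE a b -> (wf a <-> wf b).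
Proof. intros H; induction H as [x y [H1 [H2 _]]| | |]; tauto. Qed.

Lemma ac_eqE x y : ac x y -> wf x -> eqE x y.
Proof.
  intros H; induction H as [x y H| x | x y H IH | x y z H1 IH1 H2 IH2]; intros Hw.
  - apply rst_step; repeat split; auto. now apply (ac_wf x y (ac_step _ _ H)).
  - apply eqE_refl.
  - apply eqE_sym, IH. now apply (ac_wf x y).
  - eapply eqE_trans; [apply IH1; auto| apply IH2]. now apply (ac_wf x y).
Qed.

Lemma eqE_plug c a b : eqE a b -> wf (plug c a) -> eqE (plug c a) (plug c b).
Proof.
  intros H; induction H as [x y [H1 [H2 H3]]| x | x y H IH | x y z H1 IH1 H2 IH2]; intros Hw.
  - apply rst_step; repeat split; [auto| eapply wf_plug; eauto|].
    destruct H3; [left| right]; now apply ctx_closure_plug.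
  - apply eqE_refl.
  - apply eqE_sym, IH. eapply wf_plug; eauto. apply (eqE_wf x y H). eapply wf_plug_inv; eauto.
  - eapply eqE_trans; [apply IH1; auto| apply IH2].
    eapply wf_plug; eauto. apply (eqE_wf x y H1). eapply wf_plug_inv; eauto.
Qed.

Lemma eqE_App f l l' : Forall2 eqE l l' -> wf (App f l) -> eqE (App f l) (App f l').
Proof.
  intros H; change (App f l) with (App f ([] ++ l)); change (App f l') with (App f ([] ++ l')).
  generalize (@nil tm) as l0; induction H as [|a b l l' Hab Hl IH]; intros l0 Hw; [apply eqE_refl|].
  apply eqE_trans with (plug (FApp f l0 l) b); [now apply (eqE_plug (FApp f l0 l))|].
  replace (plug (FApp f l0 l) b) with (App f ((l0 ++ [b]) ++ l))
    by (simpl; now rewrite <- app_assoc).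
  replace (l0 ++ b :: l') with ((l0 ++ [b]) ++ l') by now rewrite <- app_assoc.
  apply IH. rewrite <- app_assoc. apply (wf_plug (FApp f l0 l) a); auto.
  apply (eqE_wf a b Hab), (wf_plug_inv (FApp f l0 l)), Hw.
Qed.

Lemma list_choice {A B} (Q : A -> B -> Prop) (l : list A) :
  (forall a, In a l -> exists b, Q a b) -> exists l', Forall2 Q l l'.
Proof.
  induction l as [|a l IH]; intros H; [exists []; constructor|].
  destruct (H a (or_introl eq_refl)) as [b Hb].
  destruct IH as [l' Hl']; [intros; apply H; simpl; auto|].
  exists (b :: l'); constructor; auto.
Qed.

Lemma Forall2_in_right {A B} (Q : A -> B -> Prop) l l' b :
  Forall2 Q l l' -> In b l' -> exists a, In a l /\ Q a b.
Proof.
  intros H; induction H; simpl; [tauto|]. intros [<-|Hb]; eauto.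
  destruct (IHForall2 Hb) as [a [Ha Hq]]; eauto.
Qed.

Lemma ectx_wf G C : ectx G C -> (forall x, In x G -> wf x) -> wf C.
Proof. intros H HG; induction H; auto. constructor; auto. Qed.

Lemma id_cond_ectx D G C : ectx D C ->
  (forall x, In x D -> wf x) -> (forall x, In x D -> id_cond G x) -> id_cond G C.
Proof.
  intros H HD Hx; induction H as [t Ht| f args Hlen Hargs IH]; auto.
  destruct (list_choice (fun a b => ectx G b /\ eqE a b) args IH) as [args' Hl].
  exists (App f args'); split.
  - apply ectx_App; [now rewrite <- (Forall2_length Hl)|].
    intros b Hb; destruct (Forall2_in_right _ _ _ _ Hl Hb) as [a [_ [Hb' _]]]; auto.
  - apply eqE_App; [eapply Forall2_impl; [|exact Hl]; simpl; tauto|].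
    apply (ectx_wf D); auto. apply ectx_App; auto.
Qed.

Lemma rewrites_wf a b : rewrites a b -> wf a -> wf b.
Proof. intros H; induction H as [a b [_ [Hb _]]| |]; auto. Qed.

Lemma rewrites_normal s u : rewrites s u -> normal s -> u = s.
Proof.
  intros H; apply clos_rt_rt1n in H; destruct H as [|b c Hb Hr]; auto.
  intros Hn; exfalso; exact (Hn b Hb).
Qed.

Lemma rewrites_ac_l a b c : rewrites b c -> ac a b -> wf a -> exists c', rewrites a c' /\ ac c' c.
Proof.
  intros H; apply clos_rt_rt1n in H; destruct H as [|b1 c0 Hb Hr]; intros Hab Ha.
  - exists a; split; auto using rt_refl.
  - exists c0; split; auto using ac_refl.
    apply rt_trans with b1; [apply rt_step| now apply clos_rt1n_rt].
    destruct Hb as [_ [Hb1 [b' [c' [H1 [H2 H3]]]]]].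
    repeat split; auto. exists b', c'; eauto using ac_trans.
Qed.

Definition joinable s t := exists u1 u2, rewrites s u1 /\ rewrites t u2 /\ ac u1 u2.

Lemma joinable_refl s : joinable s s.
Proof. exists s, s; auto using rt_refl, ac_refl. Qed.

Lemma joinable_sym s t : joinable s t -> joinable t s.
Proof. intros [u1 [u2 [H1 [H2 H3]]]]; exists u2, u1; auto using ac_sym. Qed.

Lemma joinable_trans s t v : joinable s t -> joinable t v -> wf s -> wf t -> wf v -> joinable s v.
Proof.
  intros [u1 [u2 [H1 [H2 H3]]]] [v1 [v2 [H4 [H5 H6]]]] Hs Ht Hv.
  destruct (RE_confluent t u2 v1 Ht H2 H4) as [w1 [w2 [H7 [H8 H9]]]].
  destruct (rewrites_ac_l u1 u2 w1 H7 H3 (rewrites_wf _ _ H1 Hs)) as [w1' [H10 H11]].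
  destruct (rewrites_ac_l v2 v1 w2 H8 (ac_sym _ _ H6) (rewrites_wf _ _ H5 Hv)) as [w2' [H12 H13]].
  exists w1', w2'; repeat split; [eapply rt_trans; eauto| eapply rt_trans; eauto|].
  eauto using ac_trans, ac_sym.
Qed.

Lemma estep_joinable s t : estep F arity oplus RE s t -> joinable s t.
Proof.
  intros [Hs [Ht [Hr|Ha]]].
  - exists t, t; repeat split; auto using rt_refl, ac_refl.
    apply rt_step; repeat split; auto. exists s, t; auto using ac_refl.
  - exists s, t; repeat split; auto using rt_refl, ac_step.
Qed.

Lemma eqE_joinable s t : eqE s t -> wf s -> joinable s t.
Proof.
  intros H; apply clos_rst_rst1n in H; induction H as [x| x y z Hxy H IH]; intros Hx;
    [apply joinable_refl|].
  assert (Hy : wf y) by (destruct Hxy as [[_ [Hy _]]|[Hy _]]; auto).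
  assert (Hz : wf z) by (apply (eqE_wf y z); auto; now apply clos_rst1n_rst).
  apply joinable_trans with y; auto.
  destruct Hxy; [now apply estep_joinable| now apply joinable_sym, estep_joinable].
Qed.

Lemma eqE_nf_rewrites s t : eqE s t -> nf s -> exists u, rewrites t u /\ ac s u.
Proof.
  intros H [Hs Hn]; destruct (eqE_joinable s t H Hs) as [u1 [u2 [H1 [H2 H3]]]].
  apply rewrites_normal in H1; subst; eauto.
Qed.

(** * Rewrite rules do not introduce variables *)

Inductive pat_var : nat -> pat F -> Prop :=
| pv_Var x : pat_var x (PVar x)
| pv_App x f ps p : In p ps -> pat_var x p -> pat_var x (PApp f ps).

Lemma inst_ext (s1 s2 : nat -> tm) p :
  (forall z, pat_var z p -> s1 z = s2 z) -> inst F s1 p = inst F s2 p.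
Proof.
  induction p as [n| f ps IH] using pat_nested_ind; intros H; simpl.
  - apply H; constructor.
  - f_equal. apply map_ext_in; intros p Hp. apply IH; auto.
    intros z Hz; apply H; econstructor; eauto.
Qed.

Lemma subterm_inst_var (s : nat -> tm) p z : pat_var z p -> subterm (s z) (inst F s p).
Proof.
  intros H; induction H; simpl; [apply rt_refl|].
  eapply subterm_trans; [exact IHpat_var|]. apply subterm_App. now apply in_map.
Qed.

Lemma wf_inst (s : nat -> tm) p :
  wf_pat arity p -> (forall z, pat_var z p -> wf (s z)) -> wf (inst F s p).
Proof.
  induction p as [n| f ps IH] using pat_nested_ind; intros Hp H; simpl.
  - apply H; constructor.
  - inversion Hp; subst. constructor; [now rewrite length_map|].
    intros a Ha; apply in_map_iff in Ha as [p [<- Hp']].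
    apply IH; auto. intros z Hz; apply H; econstructor; eauto.
Qed.

Lemma ctx_closure_replace (r : tm -> tm -> Prop) s0 t0 : r s0 t0 ->
  forall x, subterm s0 x ->
  exists x', ctx_closure F r x x' /\ subterm t0 x' /\ (wf x -> wf t0 -> wf x').
Proof.
  intros Hr x Hs; apply clos_rt_rtn1 in Hs; induction Hs as [|y z Hyz Hs IH].
  - exists t0; repeat split; [now apply cc_top| apply rt_refl| auto].
  - destruct IH as [y' [H1 [H2 H3]]]. apply isubE in Hyz as [c ->].
    exists (plug c y'); repeat split; [now apply ctx_closure_plug| |].
    + eapply subterm_isub_trans; eauto using isub_plug.
    + intros Hw Ht. eapply wf_plug; eauto using wf_plug_inv.
Qed.

(* An extra variable of [r] could be instantiated by the instance of [l] itself,
   giving a term that rewrites to a term containing it again: an infinite rewrite chain. *)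
Lemma rule_vars_incl l r (s : nat -> tm) : In (l, r) RE -> wf (inst F s l) ->
  forall y, pat_var y r -> pat_var y l.
Proof.
  intros Hin Hl y Hy. destruct (classic (pat_var y l)) as [|Hn]; auto. exfalso.
  set (s0 := inst F s l) in Hl.
  set (s' := fun z => if excluded_middle_informative (pat_var z l) then s z else s0).
  assert (Hs' : forall z, wf (s' z)).
  { intros z; unfold s'; destruct excluded_middle_informative; auto.
    eapply wf_subterm; eauto using subterm_inst_var. }
  assert (Hsub : subterm s0 (inst F s' r)).
  { replace s0 with (s' y) by (unfold s'; now destruct excluded_middle_informative).
    now apply subterm_inst_var. }
  assert (Hrt : rule_top F RE s0 (inst F s' r)).
  { replace s0 with (inst F s' l) at 1; [now apply rt_inst|].
    apply inst_ext; intros z Hz; unfold s'; now destruct excluded_middle_informative. }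
  assert (Hw0 : wf (inst F s' r)) by (apply wf_inst; auto; apply (rules_wf l r Hin)).
  assert (Hacc : forall x, Acc (fun u v => rAC v u) x -> wf x -> subterm s0 x -> False).
  { intros x Ha; induction Ha as [x _ IH]; intros Hx Hsx.
    destruct (ctx_closure_replace _ _ _ Hrt x Hsx) as [x' [H1 [H2 H3]]].
    apply (IH x'); [| auto| exact (subterm_trans _ _ _ Hsub H2)].
    repeat split; auto. exists x, x'; repeat split; auto using ac_refl. }
  apply (Hacc s0); [now apply RE_terminating| exact Hl| apply rt_refl].
Qed.

(** * Aliens *)

(* [aliens P t]: [t] is an E-context whose holes are filled with guarded terms
   satisfying [P] (the "aliens" of [t]). *)
Inductive aliens (P : tm -> Prop) : tm -> Prop :=
| aliens_guarded t : guarded t -> P t -> aliens P t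
| aliens_App f args : (forall a, In a args -> aliens P a) -> aliens P (App f args).

Lemma aliens_mono (P Q : tm -> Prop) t : (forall g, P g -> Q g) -> aliens P t -> aliens Q t.
Proof. intros H Ht; induction Ht; [apply aliens_guarded | apply aliens_App]; auto. Qed.

Lemma aliens_App_iff P f l : aliens P (App f l) <-> forall a, In a l -> aliens P a.
Proof. split; [intros H; inversion H; subst; [contradiction| auto] | apply aliens_App]. Qed.

Lemma aliens_guarded_iff P t : guarded t -> (aliens P t <-> P t).
Proof.
  intros Hg; split; [intros H; inversion H; subst; auto; contradiction| now apply aliens_guarded].
Qed.

Definition ac_closed (P : tm -> Prop) := forall a b, P a -> ac a b -> P b.

Section AcClosed.
Variable P : tm -> Prop.
Hypothesis P_ac_closed : ac_closed P.

Lemma aliens_acstep x y : acstep x y -> (aliens P x <-> aliens P y).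
Proof.
  assert (All2 : forall (Q : tm -> Prop) u v, (forall d, In d [u; v] -> Q d) <-> Q u /\ Q v).
  { intros Q u v; simpl; firstorder subst; auto. }
  revert x y; apply ctx_closure_plug_ind.
  - intros x y H; destruct H; repeat (rewrite aliens_App_iff || rewrite All2); tauto.
  - intros c s t Hst IH; destruct (plug_guarded_or_App c) as [Hg|[f [l1 [l2 ->]]]].
    + rewrite !aliens_guarded_iff by apply Hg.
      assert (Hac : ac (plug c s) (plug c t)) by now apply ac_step, ctx_closure_plug.
      split; intros; eapply P_ac_closed; eauto using ac_sym.
    + simpl; rewrite !aliens_App_iff.
      split; intros H d Hd; apply in_app_or in Hd as [Hd|[<-|Hd]];
        try (apply H, in_or_app; simpl; auto; fail);
        apply IH, H, in_or_app; simpl; auto.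
Qed.

Lemma aliens_ac x y : ac x y -> aliens P x -> aliens P y.
Proof.
  intros H; apply clos_rst_rst1n in H; induction H as [| x y z [H|H] _ IH]; auto;
    intros Hx; apply IH; [apply (aliens_acstep x y H)| apply (aliens_acstep y x H)]; exact Hx.
Qed.
End AcClosed.

Lemma aliens_inst_var P (s : nat -> tm) p z :
  aliens P (inst F s p) -> pat_var z p -> aliens P (s z).
Proof.
  intros H Hz; induction Hz; simpl in H; auto.
  apply IHHz. rewrite aliens_App_iff in H. apply H, in_map; auto.
Qed.

Lemma aliens_inst P (s : nat -> tm) p :
  (forall z, pat_var z p -> aliens P (s z)) -> aliens P (inst F s p).
Proof.
  induction p as [n| f ps IH] using pat_nested_ind; intros H; simpl.
  - apply H; constructor.
  - apply aliens_App; intros a Ha; apply in_map_iff in Ha as [q [<- Hq]].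
    apply IH; auto; intros z Hz; apply H; econstructor; eauto.
Qed.

Lemma nf_rstep_False x y : nf x -> rstep x y -> wf y -> False.
Proof.
  intros [Hw Hn] Hr Hy. apply (Hn y); repeat split; auto.
  exists x, y; repeat split; auto using ac_refl.
Qed.

Section NormalAliens.
Variable P : tm -> Prop.
Hypothesis P_nf : forall g, P g -> nf g.
Hypothesis P_ac_closed : ac_closed P.

(* Normal aliens are never rewritten and rules introduce no variables, so a rewrite step
   only rearranges the E-context around the aliens. *)
Lemma aliens_rstep x y : rstep x y -> wf x -> wf y -> aliens P x -> aliens P y.
Proof.
  revert x y; apply (ctx_closure_plug_ind _
    (fun x y => wf x -> wf y -> aliens P x -> aliens P y)).
  - intros x y [l r s Hin] Hx Hy Hal. apply aliens_inst; intros z Hz.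
    eapply aliens_inst_var; [exact Hal|]. eapply rule_vars_incl; eauto.
  - intros c s t Hst IH Hx Hy Hal; destruct (plug_guarded_or_App c) as [Hg|[f [l1 [l2 ->]]]].
    + exfalso; apply (aliens_guarded_iff _ _ (Hg s)), P_nf in Hal.
      eapply nf_rstep_False; [exact Hal| apply ctx_closure_plug, Hst| exact Hy].
    + simpl in *; rewrite aliens_App_iff in *.
      intros d Hd; apply in_app_or in Hd as [Hd|[<-|Hd]];
        try (apply Hal, in_or_app; simpl; auto; fail).
      apply IH; [exact (wf_plug_inv (FApp f l1 l2) _ Hx)
                | exact (wf_plug_inv (FApp f l1 l2) _ Hy)| apply Hal, in_or_app; simpl; auto].
Qed.

Lemma aliens_rewrites x y : rewrites x y -> aliens P x -> aliens P y.
Proof.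
  intros H; induction H as [x y [Hx [Hy [x' [y' [H1 [H2 H3]]]]]]| |]; auto.
  intros Hal; eapply aliens_ac; [exact P_ac_closed| exact H3|].
  eapply aliens_rstep; [exact H2| now apply (ac_wf x x')| now apply (ac_wf y' y)|].
  eapply aliens_ac; eauto.
Qed.
End NormalAliens.

Lemma nf_ac_closed : ac_closed nf.
Proof. exact nf_ac. Qed.

Lemma aliens_nf t : nf t -> aliens nf t.
Proof.
  induction t as [| | | | | | | f args IH] using term_nested_ind; intros Ht;
    try (apply aliens_guarded; [exact I| exact Ht]).
  apply aliens_App; intros a Ha; apply IH; auto.
  eapply nf_subterm; eauto; now apply subterm_App.
Qed.

Lemma aliens_subterm s t : subterm t s -> aliens (fun h => subterm h s) t.
Proof.
  induction t as [| | | | | | | f args IH] using term_nested_ind; intros Hs;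
    try (apply aliens_guarded; [exact I| exact Hs]).
  apply aliens_App; intros a Ha; apply IH; auto.
  eapply subterm_trans; [|exact Hs]. now apply subterm_App.
Qed.

Lemma guarded_eqE_ectx G g C : guarded g -> nf g -> eqE g C -> ectx G C -> ctx_nf G ->
  exists gam h, In gam G /\ subterm h gam /\ ac g h.
Proof.
  intros Hg Hgn HE HC HG.
  set (P := fun h => exists gam h', In gam G /\ subterm h' gam /\ ac h h').
  assert (HPac : ac_closed P).
  { intros a b [gam [h' [H1 [H2 H3]]]] Hab; exists gam, h'; eauto using ac_trans, ac_sym. }
  assert (HPnf : forall h, P h -> nf h).
  { intros h [gam [h' [H1 [H2 H3]]]].
    apply nf_ac with h'; [eapply nf_subterm; eauto| now apply ac_sym]. }
  assert (HalC : aliens P C).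
  { clear HE; induction HC as [t Ht| f args Hlen Hargs IH]; [|now apply aliens_App].
    eapply aliens_mono; [|apply (aliens_subterm t t), rt_refl].
    intros h Hh; exists t, h; auto using ac_refl. }
  destruct (eqE_nf_rewrites g C HE Hgn) as [w [Hrt Hgw]].
  assert (Hal : aliens P w) by (eapply aliens_rewrites; eauto).
  apply aliens_guarded_iff in Hal as [gam [h' [H1 [H2 H3]]]]; [|eapply ac_guarded; eauto].
  exists gam, h'; eauto using ac_trans.
Qed.

(** * Abstraction of a guarded normal form *)

Definition ac_free (A t : tm) : Prop := forall g, subterm g t -> ~ ac g A.

Lemma ac_free_subterm A a b : ac_free A b -> subterm a b -> ac_free A a.
Proof. intros H Hs g Hg; apply H; eapply subterm_trans; eauto. Qed.

Lemma ac_free_smaller A a : term_size a < term_size A -> ac_free A a.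
Proof.
  intros H g Hg Hac. apply ac_term_size in Hac.
  destruct (term_size_subterm _ _ Hg) as [->|Hs]; lia.
Qed.

Section Abstraction.
Variables A u : tm.
Hypothesis A_guarded : guarded A.

Fixpoint abstr (t : tm) : tm :=
  if excluded_middle_informative (ac t A) then u else
  match t with
  | Pub a => Pub (abstr a)
  | Sign a b => Sign (abstr a) (abstr b)
  | Blind a b => Blind (abstr a) (abstr b)
  | Pair a b => Pair (abstr a) (abstr b)
  | Enc a b => Enc (abstr a) (abstr b)
  | App f args => App f (map abstr args)
  | _ => t
  end.

Lemma abstr_ac_A t : ac t A -> abstr t = u.
Proof. intros H; destruct t; simpl; destruct excluded_middle_informative; tauto. Qed.

Lemma abstr_plug c a : ~ ac (plug c a) A -> abstr (plug c a) = plug (frame_map abstr c) (abstr a).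
Proof.
  intros H; destruct c; simpl; destruct excluded_middle_informative; try contradiction;
    now rewrite ?map_app.
Qed.

Lemma App_not_ac_A f l : ~ ac (App f l) A.
Proof. intros H; apply (ac_guarded _ _ (ac_sym _ _ H) A_guarded). Qed.

Lemma abstr_App f l : abstr (App f l) = App f (map abstr l).
Proof. simpl; destruct excluded_middle_informative; [now apply App_not_ac_A in a|reflexivity]. Qed.

Lemma abstr_inst (s : nat -> tm) p : abstr (inst F s p) = inst F (fun z => abstr (s z)) p.
Proof.
  induction p as [n| f ps IH] using pat_nested_ind; [reflexivity|].
  cbn [inst]; rewrite abstr_App, map_map. f_equal. now apply map_ext_in.
Qed.

Lemma abstr_acstep x y : acstep x y -> ac (abstr x) (abstr y).
Proof.
  revert x y; apply ctx_closure_plug_ind.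
  - intros x y H; destruct H; rewrite !abstr_App; cbn [map]; rewrite ?abstr_App;
      apply ac_step, cc_top; now constructor.
  - intros c s t Hst IH.
    assert (Hac : ac (plug c s) (plug c t)) by now apply ac_step, ctx_closure_plug.
    destruct (classic (ac (plug c s) A)) as [HA|HA].
    + rewrite !abstr_ac_A; eauto using ac_refl, ac_trans, ac_sym.
    + rewrite !abstr_plug; [now apply ac_plug| |exact HA].
      intros HA'; apply HA; eauto using ac_trans.
Qed.

Lemma abstr_ac x y : ac x y -> ac (abstr x) (abstr y).
Proof. intros H; induction H; eauto using abstr_acstep, ac_refl, ac_sym, ac_trans. Qed.

Lemma abstr_rstep x y : rstep x y -> wf x -> wf y -> aliens nf x -> rstep (abstr x) (abstr y).
Proof.
  revert x y; apply (ctx_closure_plug_ind _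
    (fun x y => wf x -> wf y -> aliens nf x -> rstep (abstr x) (abstr y))).
  - intros x y H Hx Hy Hal; destruct (classic (ac x A)) as [HA|HA].
    + exfalso; apply (aliens_guarded_iff nf x) in Hal;
        [|exact (ac_guarded _ _ (ac_sym _ _ HA) A_guarded)].
      apply (nf_rstep_False x y); [exact Hal| now apply cc_top| exact Hy].
    + destruct H as [l r s Hin]; rewrite !abstr_inst; apply cc_top; now constructor.
  - intros c s t Hst IH Hx Hy Hal; destruct (plug_guarded_or_App c) as [Hg|[f [l1 [l2 ->]]]].
    + exfalso; apply (aliens_guarded_iff nf _ (Hg s)) in Hal.
      eapply nf_rstep_False; [exact Hal| apply ctx_closure_plug, Hst| exact Hy].
    + rewrite !abstr_plug by apply App_not_ac_A; apply ctx_closure_plug, IH;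
        [exact (wf_plug_inv (FApp f l1 l2) _ Hx)| exact (wf_plug_inv (FApp f l1 l2) _ Hy)|].
      simpl in Hal; rewrite aliens_App_iff in Hal; apply Hal, in_or_app; simpl; auto.
Qed.

Hypothesis u_wf : wf u.

Lemma abstr_wf t : wf t -> wf (abstr t).
Proof.
  induction t as [| | | | | | | f args IH] using term_nested_ind; intros Hw;
    simpl; destruct excluded_middle_informative; auto;
    inversion Hw; subst; constructor; auto.
  - now rewrite length_map.
  - intros a Ha; apply in_map_iff in Ha as [b [<- Hb]]; auto.
Qed.

Lemma abstr_rAC x y : rAC x y -> aliens nf x -> eqE (abstr x) (abstr y).
Proof.
  intros [Hx [Hy [x' [y' [H1 [H2 H3]]]]]] Hal.
  assert (wf x') by now apply (ac_wf x x').
  assert (wf y') by now apply (ac_wf y' y).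
  apply eqE_trans with (abstr x'); [apply ac_eqE; [now apply abstr_ac| now apply abstr_wf]|].
  apply eqE_trans with (abstr y'); [|apply ac_eqE; [now apply abstr_ac| now apply abstr_wf]].
  apply rst_step; repeat split; try now apply abstr_wf. left.
  apply abstr_rstep; auto. eapply aliens_ac; eauto using nf_ac_closed.
Qed.

Lemma abstr_rewrites x y : rewrites x y -> aliens nf x -> eqE (abstr x) (abstr y).
Proof.
  intros H; induction H as [x y H| x | x y z H1 IH1 H2 IH2]; intros Hal.
  - now apply abstr_rAC.
  - apply eqE_refl.
  - eapply eqE_trans; [apply IH1; auto| apply IH2].
    eapply aliens_rewrites; eauto using nf_ac_closed.
Qed.

Lemma abstr_ac_free t : ac_free A t -> abstr t = t.
Proof.
  induction t as [| | | | | | | f args IH] using term_nested_ind; intros Hf;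
    simpl; destruct excluded_middle_informative as [HA|_];
    try (exfalso; eapply Hf; [apply rt_refl| exact HA]); auto;
    try (f_equal; first [apply IHt | apply IHt1 | apply IHt2];
         eapply ac_free_subterm; eauto; apply subterm_isub; constructor).
  f_equal. rewrite <- (map_id args) at 2. apply map_ext_in; intros a Ha; apply IH; auto.
  eapply ac_free_subterm; eauto; now apply subterm_App.
Qed.

Lemma abstr_ectx G C : ectx (A :: G) C -> (forall g, In g G -> ac_free A g) -> ectx G u ->
  ectx G (abstr C).
Proof.
  intros H HG Hu; induction H as [t [<-|Ht]| f args Hlen Hargs IH].
  - rewrite abstr_ac_A; auto using ac_refl.
  - rewrite abstr_ac_free; auto. now apply ectx_hole.
  - rewrite abstr_App. apply ectx_App; [now rewrite length_map|].
    intros a Ha; apply in_map_iff in Ha as [b [<- Hb]]; auto.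
Qed.
End Abstraction.

(* By Church-Rosser, [C] rewrites to an AC-variant of [T]; abstracting [A] by [u]
   along that rewrite sequence leaves [T] unchanged. *)
Lemma eqE_ectx_abstract A u G T C : guarded A -> nf A ->
  (forall g, In g G -> nf g /\ ac_free A g) -> nf T -> ac_free A T ->
  ectx (A :: G) C -> eqE T C -> ectx G u -> id_cond G T.
Proof.
  intros HAg HAn HG HTn HTf HC HE Hu.
  assert (Hwu : wf u) by (eapply ectx_wf; eauto; intros x Hx; apply HG; auto).
  exists (abstr A u C); split; [apply abstr_ectx; auto; intros g Hg; apply HG; auto|].
  destruct (eqE_nf_rewrites T C HE HTn) as [w [Hrt Hac]].
  assert (HalC : aliens nf C).
  { clear HE Hrt; induction HC as [t [<-|Ht]| f args _ _ IH]; [| |now apply aliens_App].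
    - now apply aliens_nf.
    - apply aliens_nf, HG, Ht. }
  assert (H1 : eqE (abstr A u C) (abstr A u w)) by (apply abstr_rewrites; auto).
  assert (H2 : ac T (abstr A u w)).
  { rewrite <- (abstr_ac_free A u T HTf) at 1; now apply abstr_ac. }
  eapply eqE_trans; [apply ac_eqE; [exact H2| apply (proj1 HTn)]|]. now apply eqE_sym.
Qed.

Lemma ok_ctx G T : ok G T -> ctx_nf G.
Proof. intros [H _]; exact H. Qed.

Lemma ok_goal G T : ok G T -> nf T.
Proof. intros [_ H]; exact H. Qed.

Lemma ok_in G T x : ok G T -> In x G -> nf x.
Proof. intros [H _]; exact (H x). Qed.

Lemma ok_change_goal G T U : ok G T -> nf U -> ok G U.
Proof. intros [H _] HU; split; [exact H| exact HU]. Qed.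

Lemma ok_change_ctx G G' T : ok G T -> ctx_nf G' -> ok G' T.
Proof. intros [_ H] HG'; split; [exact HG'| exact H]. Qed.

Lemma ok_subterm G T a : ok G T -> subterm a T -> ok G a.
Proof. intros H Ha; apply (ok_change_goal G T); auto. eapply nf_subterm; eauto using ok_goal. Qed.

Lemma ok_isub G T a : ok G T -> isub a T -> ok G a.
Proof. intros; eapply ok_subterm; eauto using subterm_isub. Qed.

Lemma ok_subterm_ctx G T a y : ok G T -> In y G -> subterm a y -> nf a.
Proof. intros H Hy Ha; eapply nf_subterm; eauto using ok_in. Qed.

Lemma ok_cons G T a : ok G T -> nf a -> ok (a :: G) T.
Proof. intros [H1 H2] Ha; split; auto. intros z [<-|Hz]; auto. Qed.

Lemma ok_cons_inv G T a : ok (a :: G) T -> nf a.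
Proof. intros H; apply (ok_in _ _ _ H); simpl; auto. Qed.

Lemma ok_uncons G T a : ok (a :: G) T -> ok G T.
Proof. intros [H1 H2]; split; auto. intros z Hz; apply H1; simpl; auto. Qed.

Lemma provR_ok G T : pR G T -> ok G T.
Proof. intros H; destruct H; auto. Qed.

Lemma provR_subst D G T : pR D T -> ok G T -> (forall x, In x D -> id_cond G x) -> pR G T.
Proof.
  intros H; induction H as [D M Hok HC| D M N Hok H1 IH1 H2 IH2 | D M N Hok H1 IH1 H2 IH2
     | D M N Hok H1 IH1 H2 IH2 | D M N Hok H1 IH1 H2 IH2]; intros HG Hx;
    try (constructor; auto; [apply IH1 | apply IH2]; auto; eapply ok_isub; eauto; constructor).
  apply R_id; auto. destruct HC as [C [HC HE]].
  destruct (id_cond_ectx D G C HC) as [C' [HC' HE']]; auto.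
  - intros x Hx'; apply (ok_in D M); auto.
  - exists C'; split; eauto using eqE_trans.
Qed.

Lemma id_cond_in G x : In x G -> id_cond G x.
Proof. intros; exists x; split; [now constructor| apply eqE_refl]. Qed.

Lemma id_cond_ac G x y : ac x y -> wf x -> In y G -> id_cond G x.
Proof. intros; exists y; split; [now constructor| now apply ac_eqE]. Qed.

Lemma provR_weaken G G' T : pR G T -> incl G G' -> ctx_nf G' -> pR G' T.
Proof.
  intros H Hi HG'; eapply provR_subst; eauto.
  - split; [exact HG'| exact (ok_goal _ _ (provR_ok _ _ H))].
  - intros x Hx; apply id_cond_in; auto.
Qed.

Lemma provR_cons G x K : pR G K -> nf x -> pR (x :: G) K.
Proof.
  intros H Hx; eapply provR_weaken; eauto using incl_tl, incl_refl.
  apply ok_ctx with K, ok_cons; auto using provR_ok.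
Qed.

Lemma provR_ac G K K' : pR G K -> ac K K' -> nf K' -> pR G K'.
Proof.
  intros H; revert K'; induction H as [G M Hok [C [HC HE]] | G M N Hok H1 IH1 H2 IH2
     | G M N Hok H1 IH1 H2 IH2 | G M N Hok H1 IH1 H2 IH2 | G M N Hok H1 IH1 H2 IH2];
    intros K' Hac HK'; pose proof (ok_change_goal _ _ _ Hok HK') as HokK'.
  1: { apply R_id; auto. exists C; split; auto. eapply eqE_trans; [|exact HE].
        apply ac_eqE; [now apply ac_sym| apply HK']. }
  all: apply ac_same_head in Hac; inversion Hac; subst; constructor; auto;
    [apply IH1 | apply IH2]; auto; apply (ok_goal G), (ok_isub _ _ _ HokK'); constructor.
Qed.

Lemma provR_ectx G T : pR G T -> exists C, ectx G C.
Proof. intros H; induction H as [G M _ [C [HC _]]| | | |]; eauto. Qed.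

Lemma provR_guarded G A : pR G A -> ~ id_cond G A -> guarded A.
Proof. intros H Hn; destruct H; simpl; auto. contradiction. Qed.

Lemma provR_cut_id G A K : id_cond G A -> pR (A :: G) K -> ok G K -> pR G K.
Proof. intros HA H Hok; eapply provR_subst; eauto. intros x [<-|Hx]; auto using id_cond_in. Qed.

(* Every use of [A] sits in an (id) leaf, where [eqE_ectx_abstract] replaces it by
   an arbitrary E-context over [G]. *)
Lemma provR_cut_fresh G A K : pR G A -> pR (A :: G) K -> ok G K ->
  (forall g, In g G -> ac_free A g) -> ac_free A K -> pR G K.
Proof.
  intros HA H Hok HGf HKf.
  destruct (classic (id_cond G A)) as [Hid|Hnid]; [eapply provR_cut_id; eauto|].
  assert (HAg : guarded A) by (eapply provR_guarded; eauto).
  pose proof (provR_ok _ _ HA) as HokA.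
  destruct (provR_ectx _ _ HA) as [u Hu].
  remember (A :: G) as D eqn:HD.
  induction H as [D M Hok' [C [HC HE]] | D M N Hok' H1 IH1 H2 IH2
     | D M N Hok' H1 IH1 H2 IH2 | D M N Hok' H1 IH1 H2 IH2 | D M N Hok' H1 IH1 H2 IH2]; subst.
  1: { apply R_id; auto. eapply (eqE_ectx_abstract A u G M C); eauto using ok_goal.
        intros g Hg; split; [eapply ok_in; eauto| auto]. }
  all: constructor; auto; [apply IH1 | apply IH2]; auto;
    first [apply (ok_isub _ _ _ Hok); constructor
          | apply (ac_free_subterm _ _ _ HKf), subterm_isub; constructor].
Qed.

Lemma ctx_nf_app l G : ctx_nf (l ++ G) <-> ctx_nf l /\ ctx_nf G.
Proof. unfold ctx_nf; setoid_rewrite in_app_iff; firstorder. Qed.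

Definition ac_incl (D G : list tm) : Prop := forall x, In x D -> exists y, In y G /\ ac x y.

Lemma incl_ac_incl D G : incl D G -> ac_incl D G.
Proof. intros H x Hx; exists x; auto using ac_refl. Qed.

Lemma ac_incl_incl D G G' : ac_incl D G -> incl G G' -> ac_incl D G'.
Proof. intros H Hi x Hx; destruct (H x Hx) as [y [Hy Hxy]]; eauto. Qed.

Lemma ac_incl_app l l' D G : Forall2 ac l l' -> ac_incl D G -> ac_incl (l ++ D) (l' ++ G).
Proof.
  intros Hl HD; induction Hl as [|x y l l' Hxy _ IH]; simpl;
    [intros x Hx; destruct (HD x Hx) as [y [Hy Hxy]]; eauto|].
  intros z [<-|Hz]; [exists y; simpl; auto|].
  destruct (IH z Hz) as [w [Hw Hzw]]; exists w; simpl; auto.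
Qed.

Lemma ctx_nf_ac l l' : Forall2 ac l l' -> ctx_nf l -> ctx_nf l'.
Proof.
  intros Hl Hn y Hy; destruct (Forall2_in_right _ _ _ _ Hl Hy) as [x [Hx Hxy]].
  eapply nf_ac; eauto.
Qed.

Lemma provR_ac_incl D G K : pR D K -> ac_incl D G -> ok G K -> pR G K.
Proof.
  intros H Hs Hok; eapply provR_subst; eauto. intros x Hx.
  destruct (Hs x Hx) as [y [Hy Hxy]]. apply (id_cond_ac G x y); auto.
  apply (ok_in D K); auto using provR_ok.
Qed.

Lemma provR_ac_incl_subterm D G K K' y : pR D K -> ac_incl D G -> ctx_nf G ->
  ac K K' -> In y G -> subterm K' y -> pR G K'.
Proof.
  intros H Hs HG Hac Hy Hsub.
  assert (HK' : nf K') by (eapply nf_subterm; eauto).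
  eapply provR_ac; eauto. apply (provR_ac_incl D); auto.
  split; [exact HG| eapply nf_ac; eauto using ac_sym].
Qed.

(* The left rules of [L], uniformly: [left_rule G T l] means that [G |- T] follows
   from [l ++ G |- T] by one left rule (including (ls)). *)
Inductive left_rule (G : list tm) (T : tm) : list tm -> Prop :=
| lr_pair M N : In (Pair M N) G -> left_rule G T [M; N]
| lr_enc M K : In (Enc M K) G -> pR G K -> left_rule G T [M; K]
| lr_sign M K L : In (Sign M K) G -> In (Pub L) G -> ac K L -> left_rule G T [M]
| lr_blind1 M K : In (Blind M K) G -> pR G K -> left_rule G T [M; K]
| lr_blind2 M R K : In (Sign (Blind M R) K) G -> pR G R -> left_rule G T [Sign M K; R]
| lr_gs A : gsub F A G T -> pR G A -> left_rule G T [A].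

Lemma provL_left G T l : ok G T -> left_rule G T l -> pL (l ++ G) T -> pL G T.
Proof.
  intros Hok H; destruct H; simpl; intros HL;
    [eapply L_lp | eapply L_le | eapply L_sign | eapply L_blind1 | eapply L_blind2 | eapply L_ls];
    eauto.
Qed.

Lemma provL_left_ind (P : list tm -> tm -> Prop) :
  (forall G T, pR G T -> P G T) ->
  (forall G T l, ok G T -> left_rule G T l -> pL (l ++ G) T -> P (l ++ G) T -> P G T) ->
  forall G T, pL G T -> P G T.
Proof.
  intros HR Hleft G T H; induction H.
  - auto.
  - apply (Hleft _ _ [M; N]); auto. now apply lr_pair.
  - apply (Hleft _ _ [M; K]); auto. now apply lr_enc.
  - apply (Hleft _ _ [M]); auto. now apply lr_sign with K L.
  - apply (Hleft _ _ [M; K]); auto. now apply lr_blind1.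
  - apply (Hleft _ _ [Sign M K; R]); auto. now apply lr_blind2.
  - apply (Hleft _ _ [A]); auto. now apply lr_gs.
Qed.

Lemma provL_ok G T : pL G T -> ok G T.
Proof. intros H; destruct H; auto. Qed.

Lemma provL_ctx_nf l G T : pL (l ++ G) T -> ctx_nf l.
Proof. intros H; apply (ctx_nf_app l G), (ok_ctx _ T), provL_ok, H. Qed.

Lemma gsub_incl A G G' M : gsub F A G M -> incl G G' -> gsub F A G' M.
Proof. intros [Hg [u [[Hu|Hu] Hs]]] Hi; split; auto; exists u; auto. Qed.

Lemma gsub_goal A G N T : gsub F A G N -> subterm N T -> gsub F A G T.
Proof.
  intros [Hg [v [[Hv|<-] Hs]]] HN; split; auto; [exists v| exists T]; split; auto.
  eapply subterm_trans; eauto.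
Qed.

Lemma left_rule_weaken G G' T l : left_rule G T l -> incl G G' -> ctx_nf G' -> left_rule G' T l.
Proof.
  intros H Hi HG'; destruct H;
    [apply lr_pair| apply lr_enc| eapply lr_sign| apply lr_blind1| apply lr_blind2| apply lr_gs];
    eauto using gsub_incl, provR_weaken.
Qed.

Lemma left_rule_goal G N T l : left_rule G N l ->
  (forall A, gsub F A G N -> gsub F A G T) -> left_rule G T l.
Proof.
  intros H Hg; destruct H;
    [apply lr_pair| apply lr_enc| eapply lr_sign| apply lr_blind1| apply lr_blind2| apply lr_gs];
    eauto.
Qed.

Lemma left_rule_any_goal G N T l : left_rule G N l ->
  left_rule G T l \/ exists A, l = [A] /\ pR G A.
Proof.
  intros H; destruct H; [left ..| right; eauto];
    [apply lr_pair| apply lr_enc| eapply lr_sign| apply lr_blind1| apply lr_blind2]; eauto.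
Qed.

Lemma provL_weaken G G' T : pL G T -> incl G G' -> ctx_nf G' -> pL G' T.
Proof.
  intros H; revert G'; revert G T H.
  apply (provL_left_ind (fun G T => forall G', incl G G' -> ctx_nf G' -> pL G' T)).
  - intros G T HR G' Hi HG'.
    apply L_r; [eapply ok_change_ctx, HG'; eauto using provR_ok| eapply provR_weaken; eauto].
  - intros G T l Hok Hl HL IH G' Hi HG'.
    apply provL_left with l; [eapply ok_change_ctx; eauto| eapply left_rule_weaken; eauto|].
    apply IH; [now apply incl_app_app| apply ctx_nf_app; eauto using provL_ctx_nf].
Qed.

(* Left rules do not look at the goal, except for the side condition of (ls). *)
Lemma provL_replace_goal G N T : pL G N -> ok G T ->
  (forall G', incl G G' -> ctx_nf G' -> pR G' N -> pL G' T) ->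
  (forall A G', gsub F A G' N -> gsub F A G' T) ->
  pL G T.
Proof.
  intros H; revert T; revert G N H.
  apply (provL_left_ind (fun G N => forall T, ok G T ->
    (forall G', incl G G' -> ctx_nf G' -> pR G' N -> pL G' T) ->
    (forall A G', gsub F A G' N -> gsub F A G' T) -> pL G T)).
  - intros G N HR T HokT Hleaf Hg.
    apply Hleaf; [apply incl_refl| exact (ok_ctx _ _ HokT)| exact HR].
  - intros G N l Hok Hl HL IH T HokT Hleaf Hg.
    apply provL_left with l; [exact HokT| apply left_rule_goal with N; auto|].
    apply IH; auto.
    + eapply ok_change_ctx, ok_ctx, provL_ok, HL; exact HokT.
    + intros G' Hi; apply Hleaf; intros a Ha; apply Hi, in_or_app; auto.
Qed.

Lemma provL_right (c : tm -> tm -> tm) :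
  (forall G M N, ok G (c M N) -> pR G M -> pR G N -> pR G (c M N)) ->
  (forall M N, isub M (c M N)) -> (forall M N, isub N (c M N)) ->
  forall G M N, pL G M -> pL G N -> ok G (c M N) -> pL G (c M N).
Proof.
  intros Hc H1 H2 G M N HM HN Hok.
  apply (provL_replace_goal G M); auto.
  - intros G' Hi HG' HRM. apply (provL_replace_goal G' N).
    + eapply provL_weaken; eauto.
    + eapply ok_change_ctx; eauto.
    + intros G'' Hi' HG'' HRN.
      assert (Hok'' : ok G'' (c M N)) by (eapply ok_change_ctx; eauto).
      apply L_r; auto. apply Hc; eauto using provR_weaken.
    + intros A G0 Hs; eapply gsub_goal; eauto using subterm_isub.
  - intros A G0 Hs; eapply gsub_goal; eauto using subterm_isub.
Qed.

Lemma left_rule_ac_incl D G T l : left_rule D T l -> ac_incl D G -> ok G T ->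
  exists l', left_rule G T l' /\ Forall2 ac l l'.
Proof.
  intros H Hs Hok; pose proof (ok_ctx _ _ Hok) as HG.
  destruct H as [M N Hin| M K Hin HK| M K L Hin Hin2 HKL| M K Hin HK| M R K Hin HR| A Hgs HA];
    [ destruct (Hs _ Hin) as [y [Hy Hac]] ..
    | destruct Hgs as [HAg [v [[Hv| ->] Hsv]]]; [destruct (Hs v Hv) as [y [Hy Hvy]]|]];
    try (apply ac_same_head in Hac; inversion Hac; subst).
  - exists [a'; b']; split; [now apply lr_pair| auto].
  - exists [a'; b']; split; [apply lr_enc; auto| auto].
    eapply provR_ac_incl_subterm; eauto. apply subterm_isub; constructor.
  - destruct (Hs _ Hin2) as [z [Hz Hac2]]; apply ac_same_head in Hac2; inversion Hac2; subst.
    exists [a']; split; [apply lr_sign with b' a'0; eauto using ac_trans, ac_sym| auto].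
  - exists [a'; b']; split; [apply lr_blind1; auto| auto].
    eapply provR_ac_incl_subterm; eauto. apply subterm_isub; constructor.
  - match goal with Hb : ac (Blind M R) _ |- _ => apply ac_same_head in Hb; inversion Hb; subst end.
    exists [Sign a'0 b'; b'0]; split; [apply lr_blind2; auto| auto using ac_Sign].
    eapply provR_ac_incl_subterm; eauto.
    apply subterm_trans with (Blind a'0 b'0); apply subterm_isub; constructor.
  - destruct (ac_guarded_subterm v y Hvy A HAg Hsv) as [A' [HA'y HAA']].
    exists [A']; split; [apply lr_gs| auto].
    + split; [eapply ac_guarded; eauto| exists y; auto].
    + eapply provR_ac_incl_subterm; eauto.
  - exists [A]; split; [apply lr_gs| auto using ac_refl].
    + split; [exact HAg| exists T; auto].
    + apply (provR_ac_incl D); auto. eapply ok_subterm; eauto.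
Qed.

Lemma provL_ac_incl D T : pL D T -> forall G, ac_incl D G -> ok G T -> pL G T.
Proof.
  revert D T; apply (provL_left_ind (fun D T => forall G, ac_incl D G -> ok G T -> pL G T)).
  - intros D T HR G Hs HokG. apply L_r; auto. eapply provR_ac_incl; eauto.
  - intros D T l Hok Hl HL IH G Hs HokG.
    destruct (left_rule_ac_incl D G T l Hl Hs HokG) as [l' [Hl' Hll']].
    apply provL_left with l'; auto. apply IH; [now apply ac_incl_app|].
    eapply ok_change_ctx; [exact HokG|].
    apply ctx_nf_app; split; eauto using ctx_nf_ac, provL_ctx_nf, ok_ctx.
Qed.

(** * Cut admissibility in the left system *)

Definition right_premises (G : list tm) (T : tm) : Prop :=
  match T with
  | Pair M N | Enc M N | Sign M N | Blind M N => pR G M /\ pR G N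
  | _ => False
  end.

Lemma provR_inv G T : pR G T -> id_cond G T \/ right_premises G T.
Proof. intros H; destruct H; simpl; auto. Qed.

Lemma provR_unguarded_id G A : pR G A -> ~ guarded A -> id_cond G A.
Proof. intros H Hg; destruct H; auto; exfalso; apply Hg; exact I. Qed.

Definition fresh_in (A : tm) (G : list tm) (T : tm) : Prop :=
  (forall g, In g G -> ac_free A g) /\ ac_free A T.

Definition abstractable (A : tm) (G : list tm) (T : tm) : Prop :=
  id_cond G A \/ fresh_in A G T.

Lemma abstractable_goal A G T K :
  abstractable A G T -> (fresh_in A G T -> ac_free A K) -> abstractable A G K.
Proof. intros [Hid|[HG HT]] HK; [now left| right; split; [exact HG| apply HK; split; auto]]. Qed.

Lemma provR_cut_abstractable G A K : pR (A :: G) K -> pR G A -> ok G K ->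
  abstractable A G K -> pR G K.
Proof. intros HK HA Hok [Hid|[HG HKf]]; [eapply provR_cut_id| eapply provR_cut_fresh]; eauto. Qed.

(* If [A] occurs (up to AC) as a subterm of [G |- T], one (ls) step on that occurrence
   replaces [A] in the context. *)
Lemma provL_cut_occurring A D G T g gam : guarded A -> pR G A ->
  (In gam G \/ gam = T) -> subterm g gam -> ac g A ->
  pL D T -> ac_incl D (A :: G) -> ok G T -> pL G T.
Proof.
  intros HAg HA Hgam Hs Hac HD Hi Hok.
  assert (Hgnf : nf g)
    by (destruct Hgam as [Hgam| ->]; eauto using ok_subterm_ctx, ok_goal, ok_subterm).
  apply L_ls with g; auto.
  - split; [eapply ac_guarded; eauto using ac_sym| exists gam; auto].
  - eapply provR_ac; eauto using ac_sym.
  - apply (provL_ac_incl D T HD); [|now apply ok_cons].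
    intros x Hx; destruct (Hi x Hx) as [y [[<-|Hy] Hxy]]; [exists g| exists y]; split;
      simpl; eauto using ac_trans, ac_sym.
Qed.

Definition cut_admissible (A : tm) : Prop :=
  forall G T, pR G A -> pL (A :: G) T -> ok G T -> pL G T.

Section CutStep.
Variable A : tm.
Hypothesis cut_smaller : forall B, term_size B < term_size A -> cut_admissible B.

(* Once the occurrences of [A] are dealt with by [provL_cut_occurring], a guarded [A]
   is neither derivable by (id) nor present in the sequent. *)
Definition cut_ready (G : list tm) (T : tm) : Prop :=
  (guarded A -> ~ id_cond G A) /\ abstractable A G T.

Lemma cut_ready_or_provL D G T : pR G A -> pL D T -> ac_incl D (A :: G) -> ok G T ->
  pL G T \/ cut_ready G T.
Proof.
  intros HA HD Hi Hok.
  destruct (classic (exists g gam, (In gam G \/ gam = T) /\ subterm g gam /\ ac g A))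
    as [[g [gam [Hgam [Hs Hac]]]]|Hno].
  - destruct (classic (guarded A)) as [HAg|HAng].
    + left; eapply provL_cut_occurring; eauto.
    + right; split; [contradiction| left; now apply provR_unguarded_id].
  - right; split.
    + intros HAg [C [HC HE]]. apply Hno.
      destruct (guarded_eqE_ectx G A C HAg (ok_goal _ _ (provR_ok _ _ HA)) HE HC (ok_ctx _ _ Hok))
        as [gam [h [H1 [H2 H3]]]].
      exists h, gam; eauto using ac_sym.
    + right; split; [intros gam Hgam g Hg Hac| intros g Hg Hac]; apply Hno; exists g; eauto.
Qed.

Lemma provR_cut_ready G T K y : cut_ready G T -> pR G A -> pR (A :: G) K -> ok G T ->
  In y G -> subterm K y -> pR G K.
Proof.
  intros [_ Habs] HA HK Hok Hy Hs. apply (provR_cut_abstractable G A); auto.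
  - eapply ok_change_goal; eauto using ok_subterm_ctx.
  - apply (abstractable_goal A G T); auto. intros [HG _]; eapply ac_free_subterm; eauto.
Qed.

Lemma cut_components G T M N : term_size M < term_size A -> term_size N < term_size A ->
  pR G M -> pR G N -> pL (M :: N :: G) T -> ok G T -> pL G T.
Proof.
  intros HsM HsN HM HN HL Hok.
  apply (cut_smaller N HsN); auto. apply (cut_smaller M HsM); auto.
  - apply provR_cons; eauto using provR_ok, ok_goal.
  - apply ok_cons; eauto using provR_ok, ok_goal.
Qed.

Lemma cut_sign_blind G T M R K : A = Sign (Blind M R) K ->
  pR G (Blind M R) -> pR G K -> pR G R -> pL (Sign M K :: G) T -> ok G T -> pL G T.
Proof.
  intros HeA HB HK HR HL Hok.
  assert (HsS : term_size (Sign M K) < term_size A) by (rewrite HeA; simpl; lia).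
  assert (HSnf : nf (Sign M K)) by exact (ok_cons_inv _ _ _ (provL_ok _ _ HL)).
  assert (HMnf : nf M) by (eapply nf_subterm; [apply subterm_isub; constructor| exact HSnf]).
  destruct (provR_inv _ _ HB) as [Hid|[HM _]].
  2: { apply (cut_smaller _ HsS); auto. apply R_signR; auto. now apply ok_change_goal with T. }
  (* [Blind M R] is an E-context over [G], hence AC-equal to a subterm [Blind a b] of [G]:
     open it with (ls) and (blind1), then rebuild [Sign M K] from [a]. *)
  destruct Hid as [C [HC HE]].
  destruct (guarded_eqE_ectx G (Blind M R) C I (ok_goal _ _ (provR_ok _ _ HB)) HE HC
    (ok_ctx _ _ Hok)) as [gam [h [Hgam [Hh Hac]]]].
  assert (Hhnf : nf h) by eauto using ok_subterm_ctx.
  pose proof (ac_same_head _ _ Hac) as Hsh.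
  inversion Hsh as [| | | | ? ? a b HMa HRb | | |]; subst.
  assert (Hanf : nf a) by (eapply nf_subterm; [apply subterm_isub; constructor| exact Hhnf]).
  assert (Hbnf : nf b) by (eapply nf_subterm; [apply subterm_isub; constructor| exact Hhnf]).
  apply provL_left with [Blind a b]; [exact Hok| |].
  { apply lr_gs; [split; [exact I| exists gam; split; [left|]; assumption]|].
    apply (provR_ac _ _ _ HB Hac Hhnf). }
  assert (Hok1 : ok ([Blind a b] ++ G) T) by now apply ok_cons.
  apply provL_left with [a; b]; [exact Hok1| |].
  { apply lr_blind1; [simpl; auto|]. apply provR_cons; [|exact Hhnf].
    apply (provR_ac _ _ _ HR HRb Hbnf). }
  assert (Hok2 : ok ([a; b] ++ [Blind a b] ++ G) T) by (simpl; now repeat apply ok_cons).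
  apply (cut_smaller _ HsS); [| |exact Hok2].
  - apply R_signR; [now apply ok_change_goal with T| |].
    + apply R_id; [now apply ok_change_goal with T|].
      apply (id_cond_ac _ M a); simpl; auto. apply HMnf.
    + eapply provR_weaken; [exact HK| |exact (ok_ctx _ _ Hok2)].
      do 3 apply incl_tl; apply incl_refl.
  - eapply provL_weaken; [exact HL| |].
    + simpl; apply incl_cons; [simpl; auto| do 3 apply incl_tl; apply incl_tl, incl_refl].
    + apply ok_ctx with T, ok_cons; auto.
Qed.

Lemma cut_principal_blind2 G T M R K : A = Sign (Blind M R) K -> pR G A ->
  pR G (Blind M R) -> pR G K -> pR (A :: G) R ->
  cut_ready G T -> pL ([Sign M K; R] ++ G) T -> ok G T -> pL G T.
Proof.
  intros HeA HA HB HK HR [_ Habs] HL Hok.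
  assert (HsR : term_size R < term_size A) by (rewrite HeA; simpl; lia).
  assert (HSnf : nf (Sign M K)) by exact (ok_cons_inv _ _ _ (provL_ok _ _ HL)).
  assert (HRnf : nf R) by exact (ok_cons_inv _ _ _ (ok_uncons _ _ _ (provL_ok _ _ HL))).
  assert (HR' : pR G R).
  { apply (provR_cut_abstractable G A); auto; [now apply ok_change_goal with T|].
    apply (abstractable_goal A G T); auto. intros _; now apply ac_free_smaller. }
  apply (cut_sign_blind G T M R K); auto.
  apply (cut_smaller R HsR); [now apply provR_cons| |now apply ok_cons].
  eapply provL_weaken; [exact HL| intros x [<-|[<-|Hx]]; simpl; auto|].
  apply ok_ctx with T; repeat apply ok_cons; auto.
Qed.

Lemma cut_left_gs G T A0 : gsub F A0 (A :: G) T -> pR (A :: G) A0 -> A0 <> A ->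
  pR G A -> ok G T -> cut_ready G T -> pL (A0 :: G) T -> pL G T.
Proof.
  intros [HA0g [v [[[HeA|Hv]| ->] Hsv]]] HA0 Hne HA Hok Hready HL; pose proof Hready as [_ Habs].
  - subst v; destruct (term_size_subterm _ _ Hsv) as [->|Hlt]; [contradiction|].
    apply (cut_smaller A0 Hlt); auto.
    apply (provR_cut_abstractable G A); auto;
      [eapply ok_change_goal; eauto using ok_cons_inv, provL_ok|].
    apply (abstractable_goal A G T); auto. intros _; now apply ac_free_smaller.
  - apply provL_left with [A0]; auto. apply lr_gs; [split; [exact HA0g| exists v; auto]|].
    eapply provR_cut_ready; eauto.
  - apply provL_left with [A0]; auto. apply lr_gs; [split; [exact HA0g| exists T; auto]|].
    apply (provR_cut_abstractable G A); auto; [eapply ok_subterm; eauto|].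
    apply (abstractable_goal A G T); auto. intros [_ HT]; eapply ac_free_subterm; eauto.
Qed.

Lemma cut_left G T l : left_rule (A :: G) T l -> l <> [A] -> pR G A -> ok G T ->
  cut_ready G T -> pL (l ++ G) T -> pL G T.
Proof.
  intros Hl Hne HA Hok Hready HL; pose proof Hready as [Hng Habs].
  assert (Hprinc : forall x, A = x -> guarded x -> right_premises G x).
  { intros x HeA Hg; subst x; destruct (provR_inv _ _ HA) as [Hid|]; auto.
    exfalso; exact (Hng Hg Hid). }
  destruct Hl as [M N [HeA|Hin]| M K [HeA|Hin] HK| M K L [HeA|Hin1] [HeP|Hin2] HKL
                 | M K [HeA|Hin] HK| M R K [HeA|Hin] HR| A0 Hgs HA0].
  - destruct (Hprinc _ HeA I) as [HM HN].
    apply (cut_components G T M N); auto; rewrite HeA; simpl; lia.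
  - apply provL_left with [M; N]; auto. now apply lr_pair.
  - destruct (Hprinc _ HeA I) as [HM HN].
    apply (cut_components G T M K); auto; rewrite HeA; simpl; lia.
  - apply provL_left with [M; K]; auto. apply lr_enc; auto.
    eapply provR_cut_ready; eauto. apply subterm_isub; constructor.
  - exfalso; exact (Hprinc _ HeP I).
  - destruct (Hprinc _ HeA I) as [HM _].
    apply (cut_smaller M); auto. rewrite HeA; simpl; lia.
  - exfalso; exact (Hprinc _ HeP I).
  - apply provL_left with [M]; auto. eapply lr_sign; eauto.
  - destruct (Hprinc _ HeA I) as [HM HN].
    apply (cut_components G T M K); auto; rewrite HeA; simpl; lia.
  - apply provL_left with [M; K]; auto. apply lr_blind1; auto.
    eapply provR_cut_ready; eauto. apply subterm_isub; constructor.
  - destruct (Hprinc _ HeA I) as [HB HK]; eapply cut_principal_blind2; eauto.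
  - apply provL_left with [Sign M K; R]; auto. apply lr_blind2; auto.
    eapply provR_cut_ready; eauto.
    apply subterm_trans with (Blind M R); apply subterm_isub; constructor.
  - eapply cut_left_gs; eauto. intros HeA0; apply Hne; now rewrite HeA0.
Qed.

Lemma cut_ac_incl D T : pL D T -> forall G, ac_incl D (A :: G) -> pR G A -> ok G T -> pL G T.
Proof.
  revert D T; apply (provL_left_ind (fun D T =>
    forall G, ac_incl D (A :: G) -> pR G A -> ok G T -> pL G T)).
  - intros D T HR G Hi HA Hok.
    assert (HD : pL D T) by (apply L_r; auto using provR_ok).
    destruct (cut_ready_or_provL D G T HA HD Hi Hok) as [|[_ Habs]]; auto.
    apply L_r; auto. apply (provR_cut_abstractable G A); auto.
    apply (provR_ac_incl D); auto. apply ok_cons; eauto using ok_goal, provR_ok.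
  - intros D T l HokD Hl HL IH G Hi HA Hok.
    destruct (cut_ready_or_provL D G T HA (provL_left _ _ _ HokD Hl HL) Hi Hok) as [|Hready];
      auto.
    assert (HokA : ok (A :: G) T) by (apply ok_cons; eauto using ok_goal, provR_ok).
    destruct (left_rule_ac_incl D (A :: G) T l Hl Hi HokA) as [l' [Hl' Hll']].
    assert (Hl'nf : ctx_nf l') by eauto using ctx_nf_ac, provL_ctx_nf.
    assert (Hll : ac_incl (l ++ D) (l' ++ A :: G)) by now apply ac_incl_app.
    destruct (classic (l' = [A])) as [->|Hne].
    + apply IH; auto. eapply ac_incl_incl; eauto. intros x [<-|Hx]; simpl; auto.
    + apply (cut_left G T l'); auto. apply IH.
      * eapply ac_incl_incl; eauto. intros x Hx; apply in_app_or in Hx as [Hx|[<-|Hx]];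
          simpl; auto using in_or_app.
      * eapply provR_weaken; eauto using incl_appr, incl_refl.
        apply ctx_nf_app; eauto using ok_ctx.
      * apply ok_change_ctx with G; auto. apply ctx_nf_app; eauto using ok_ctx.
Qed.
End CutStep.

Lemma cut_admissible_all A : cut_admissible A.
Proof.
  remember (term_size A) as n eqn:Hn; revert A Hn.
  induction n as [n IH] using lt_wf_ind; intros A -> G T HA HL Hok.
  apply (cut_ac_incl A (fun B HB => IH _ HB B eq_refl) (A :: G) T HL G); auto.
  apply incl_ac_incl, incl_refl.
Qed.

Lemma provL_cut G M T : pL G M -> pL (M :: G) T -> ok G T -> pL G T.
Proof.
  intros H; revert T; revert G M H.
  apply (provL_left_ind (fun G M => forall T, pL (M :: G) T -> ok G T -> pL G T)).
  - intros G M HR T HT Hok. now apply (cut_admissible_all M).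
  - intros G M l HokM Hl HL IH T HT Hok.
    assert (HlG : ctx_nf (l ++ G)) by (apply ctx_nf_app; eauto using ok_ctx, provL_ctx_nf).
    assert (HlT : pL (l ++ G) T).
    { apply IH; [|now apply ok_change_ctx with G].
      eapply provL_weaken; [exact HT| |].
      - apply incl_cons; [simpl; auto| apply incl_tl, incl_appr, incl_refl].
      - intros x [<-|Hx]; [exact (ok_goal _ _ HokM)| exact (HlG x Hx)]. }
    destruct (left_rule_any_goal G M T l Hl) as [HlT'|[A [-> HA]]].
    + eapply provL_left; eauto.
    + now apply (cut_admissible_all A).
Qed.

Lemma provL_cut_side G T K l : pL G K -> left_rule (K :: G) T l -> pL (l ++ G) T -> ok G T ->
  pL G T.
Proof.
  intros HK Hl HL Hok. apply (provL_cut G K); auto.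
  pose proof (ok_goal _ _ (provL_ok _ _ HK)) as HKnf.
  apply provL_left with l; [now apply ok_cons| exact Hl|].
  eapply provL_weaken; [exact HL| apply incl_app_app; [apply incl_refl| apply incl_tl, incl_refl]|].
  apply ctx_nf_app; split; [eauto using provL_ctx_nf| apply ok_ctx with T, ok_cons; auto].
Qed.

Lemma provR_hd G K : ok G K -> pR (K :: G) K.
Proof.
  intros Hok; apply R_id; [apply ok_cons; [exact Hok| exact (ok_goal _ _ Hok)]|].
  apply id_cond_in; simpl; auto.
Qed.

Lemma provS_provL G M : pS G M -> pL G M.
Proof.
  intros H; induction H.
  - apply L_r; auto. now apply R_id.
  - eapply provL_cut; eauto.
  - eapply L_lp; eauto.
  - apply (provL_right (fun a b => Pair a b)); auto; intros; [now apply R_pR| constructor ..].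
  - apply (provL_cut_side G N K [M; K]); auto.
    apply lr_enc; [simpl; auto| apply provR_hd; eauto using provL_ok].
  - apply (provL_right (fun a b => Enc a b)); auto; intros; [now apply R_eR| constructor ..].
  - eapply L_sign; eauto.
  - apply (provL_right (fun a b => Sign a b)); auto; intros; [now apply R_signR| constructor ..].
  - apply (provL_cut_side G N K [M; K]); auto.
    apply lr_blind1; [simpl; auto| apply provR_hd; eauto using provL_ok].
  - apply (provL_right (fun a b => Blind a b)); auto; intros; [now apply R_blindR| constructor ..].
  - apply (provL_cut_side G N R [Sign M K; R]); auto.
    apply lr_blind2; [simpl; auto| apply provR_hd; eauto using provL_ok].
  - eapply provL_cut; eauto.
Qed.

Lemma provR_provS G M : pR G M -> pS G M.
Proof.
  intros H; induction H;
    [apply S_id | apply S_pR | apply S_eR | apply S_signR | apply S_blindR]; auto.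
Qed.

Lemma provL_provS G M : pL G M -> pS G M.
Proof.
  intros H; induction H;
    [ now apply provR_provS | eapply S_pL | eapply S_eL | eapply S_signL | eapply S_blindL1
    | eapply S_blindL2 | eapply S_gs ]; eauto using provR_provS.
Qed.
End Intruder.

Theorem proposition5
  (F : Type) (arity : F -> nat) (oplus : option F) (RE : list (pat F * pat F))
  (Hoplus : forall f, oplus = Some f -> arity f = 2)
  (Hrules : forall l r, In (l, r) RE -> wf_pat arity l /\ wf_pat arity r)
  (Hterm : terminating_modAC arity oplus RE)
  (Hconf : confluent_modAC arity oplus RE) :
  forall (Gamma : list (term F)) (M : term F),
    provS arity oplus RE Gamma M <-> provL arity oplus RE Gamma M.
Proof.
  intros Gamma M; split.
  - apply provS_provL; assumption.
  - apply provL_provS.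
Qed.
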